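(* Let $>$ be a $\mathcal B$-compatible reduction order. If $(\mathcal E,\varnothing)\vdash^*_{\mathcal I_B}(\varnothing,\mathcal R)$ is a fair run and neither Compose nor Collapse of $\mathcal I_B$ is applicable to $(\varnothing,\mathcal R)$, then $\mathcal R$ is canonical modulo $\mathcal B$.
   Context: Terms over a signature $\mathcal F$ and variables. For a set $\mathcal E$ of pairs of terms (equations and rules read as oriented pairs), $s\to_{\mathcal E}t$ iff $s|_p=\ell\sigma$, $t=s[r\sigma]_p$ for some $(\ell,r)\in\mathcal E$, position $p$, substitution $\sigma$; $\leftarrow$ is the inverse, $\leftrightarrow$ the symmetric closure. $\mathcal B$ is a fixed ES with $\mathrm{Var}(\ell)=\mathrm{Var}(r)$ for all $\ell\approx r\in\mathcal B$; $\sim_{\mathcal B}=\leftrightarrow^*_{\mathcal B}$, $\mathcal B^\pm=\mathcal B\cup\{t\approx s\mid s\approx t\in\mathcal B\}$; $\to_{\mathcal R/\mathcal B}=\sim_{\mathcal B}\cdot\to_{\mathcal R}\cdot\sim_{\mathcal B}$; $s\downarrow^\sim_{\mathcal R}t$ iff $s\to^*_{\mathcal R}\cdot\sim_{\mathcal B}\cdot\leftarrow^*_{\mathcal R}t$. Terminating modulo $\mathcal B$: no infinite $\to_{\mathcal R/\mathcal B}$-sequence; Church–Rosser modulo $\mathcal B$: $\leftrightarrow^*_{\mathcal R\cup\mathcal B}\subseteq\downarrow^\sim_{\mathcal R}$; complete modulo $\mathcal B$: both. A TRS is left-reduced if for every rule $\ell\to r$, $\ell$ is a normal form of the TRS without that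 rule; right-$\mathcal B$-reduced if for every rule $\ell\to r$, $r$ is a normal form of $\to_{\mathcal R/\mathcal B}$; canonical modulo $\mathcal B$ if complete modulo $\mathcal B$, left-reduced and right-$\mathcal B$-reduced. A $\mathcal B$-compatible reduction order is a well-founded order on terms closed under contexts and substitutions with $\sim_{\mathcal B}\cdot>\cdot\sim_{\mathcal B}\subseteq>$. The inference system $\mathcal I_B$ (parameterized by $>$) on pairs $(\mathcal E,\mathcal R)$ ($\uplus$ disjoint union, $s\approx^\pm t$ means $s\approx t$ or $t\approx s$): Deduce: $(\mathcal E,\mathcal R)\vdash(\mathcal E\cup\{s\approx t\},\mathcal R)$ if $s\leftarrow_{\mathcal R}\cdot\to_{\mathcal R\cup\mathcal B^\pm}t$. Orient: $(\mathcal E\uplus\{s\approx^\pm t\},\mathcal R)\vdash(\mathcal E,\mathcal R\cup\{s\to t\})$ if $s>t$. Delete: $(\mathcal E\uplus\{s\approx t\},\mathcal R)\vdash(\mathcal E,\mathcal R)$ if $s\sim_{\mathcal B}t$. Simplify: $(\mathcal E\uplus\{s\approx^\pm t\},\mathcal R)\vdash(\mathcal E\cup\{u\approx t\},\mathcal R)$ if $s\to_{\mathcal R}u$. Collapse: $(\mathcal E,\mathcal R\uplus\{s\to t\})\vdash(\mathcal E\cup\{u\approx t\},\mathcal R)$ if $s\to_{\mathcal R}u$. Compose: $(\mathcal E,\mathcal R\uplus\{s\to t\})\vdash(\mathcal E,\mathcal R\cup\{s\to u\})$ if $t\to_{\mathcal R}u$. A run for $\mathcal E$ goes from $(\mathcal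 E_0,\mathcal R_0)=(\mathcal E,\varnothing)$ to $(\mathcal E_n,\mathcal R_n)$; it is fair if $\mathcal R_n$ is left-linear and $\mathrm{PCP}(\mathcal R_n)\cup\mathrm{PCP}^\pm(\mathcal R_n,\mathcal B^\pm)\subseteq\ \downarrow^\sim_{\mathcal R_n}\cup\bigcup_{i=0}^n\leftrightarrow_{\mathcal E_i}$. Critical pairs: for sets of oriented pairs $\mathcal R_1,\mathcal R_2$ (equations of $\mathcal B^\pm$ read as oriented pairs), an overlap is $\langle\ell_1\to r_1,p,\ell_2\to r_2\rangle$ with $\ell_i\to r_i$ variants of elements of $\mathcal R_i$ without common variables, $p$ a non-variable position of $\ell_2$, $\ell_1$ and $\ell_2|_p$ unifiable, and the two rules not variants if $p=\epsilon$; with an mgu $\sigma$ it yields the critical pair $\ell_2\sigma[r_1\sigma]_p\approx r_2\sigma$, prime if all proper subterms of $\ell_2\sigma|_p$ are normal forms w.r.t. the TRS $\mathcal R$ under consideration. $\mathrm{PCP}(\mathcal R)$: prime critical pairs from overlaps of $\mathcal R$ with itself; $\mathrm{PCP}^\pm(\mathcal R,\mathcal B^\pm)$: prime critical pairs from overlaps between $\mathcal R$ and $\mathcal B^\pm$ in either order. *)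

From Stdlib Require Import List Relations.
Import ListNotations.

Set Implicit Arguments.

Section TRS.

Context {F : Type}.

Definition var := nat.

Inductive term : Type :=
| Var : var -> term
| Fun : F -> list term -> term.

(* sets of (oriented) pairs of terms: equational systems / TRSs *)
Definition rel := term -> term -> Prop.

Definition empty_rel : rel := fun _ _ => False.
Definition union (A B : rel) : rel := fun s t => A s t \/ B s t.
Definition add (A : rel) (a b : term) : rel := fun s t => A s t \/ (s = a /\ t = b).
Definition seteq (A B : rel) : Prop := forall s t, A s t <-> B s t.
Definition disj_add (A A' : rel) (a b : term) : Prop := seteq A (add A' a b) /\ ~ A' a b.
Definition disj_add_pm (A A' : rel) (a b : term) : Prop :=
  disj_add A A' a b \/ disj_add A A' b a.
Definition pm (A : rel) : rel := fun s t => A s t \/ A t s.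

Definition subst := var -> term.

Fixpoint app_subst (sigma : subst) (t : term) : term :=
  match t with
  | Var x => sigma x
  | Fun f ts => Fun f (map (app_subst sigma) ts)
  end.

Inductive occurs (x : var) : term -> Prop :=
| occ_var : occurs x (Var x)
| occ_fun : forall f ts t, In t ts -> occurs x t -> occurs x (Fun f ts).

Definition pos := list nat.

Fixpoint subterm_at (t : term) (p : pos) : option term :=
  match p with
  | [] => Some t
  | i :: p' =>
      match t with
      | Var _ => None
      | Fun f ts =>
          match nth_error ts i with
          | Some u => subterm_at u p'
          | None => None
          end
      end
  end.

Fixpoint update_nth {A : Type} (g : A -> A) (i : nat) (l : list A) : list A :=
  match l, i with
  | [], _ => []
  | a :: l', 0 => g a :: l'
  | a :: l', S i' => a :: update_nth g i' l'
  end.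

(* t[s]_p  (meaningful when p is a position of t) *)
Fixpoint replace_at (t : term) (p : pos) (s : term) : term :=
  match p with
  | [] => s
  | i :: p' =>
      match t with
      | Var x => Var x
      | Fun f ts => Fun f (update_nth (fun u => replace_at u p' s) i ts)
      end
  end.

Definition rstep (E : rel) : rel := fun s t =>
  exists l r p sigma, E l r /\ subterm_at s p = Some (app_subst sigma l)
                      /\ t = replace_at s p (app_subst sigma r).

Definition rsteps (E : rel) : rel := clos_refl_trans term (rstep E).

Definition sstep (E : rel) : rel := fun s t => rstep E s t \/ rstep E t s.

Definition conv (E : rel) : rel := clos_refl_trans term (sstep E).

Definition simB (B : rel) : rel := conv B.

Definition rstep_mod (R B : rel) : rel := fun s t =>
  exists s' t', simB B s s' /\ rstep R s' t' /\ simB B t' t.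

Definition joinable_mod (R B : rel) : rel := fun s t =>
  exists u v, rsteps R s u /\ simB B u v /\ rsteps R t v.

Definition terminating_mod (R B : rel) : Prop :=
  ~ exists f : nat -> term, forall i, rstep_mod R B (f i) (f (S i)).

Definition church_rosser_mod (R B : rel) : Prop :=
  forall s t, conv (union R B) s t -> joinable_mod R B s t.

Definition complete_mod (R B : rel) : Prop :=
  terminating_mod R B /\ church_rosser_mod R B.

Definition normal_form (R : rel) (t : term) : Prop := ~ exists u, rstep R t u.

Definition normal_form_mod (R B : rel) (t : term) : Prop := ~ exists u, rstep_mod R B t u.

Definition remove (R : rel) (l r : term) : rel := fun l' r' => R l' r' /\ (l', r') <> (l, r).

Definition left_reduced (R : rel) : Prop :=
  forall l r, R l r -> normal_form (remove R l r) l.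

Definition right_B_reduced (R B : rel) : Prop :=
  forall l r, R l r -> normal_form_mod R B r.

Definition canonical_mod (R B : rel) : Prop :=
  complete_mod R B /\ left_reduced R /\ right_B_reduced R B.

Definition var_preserving (B : rel) : Prop :=
  forall l r, B l r -> forall x, occurs x l <-> occurs x r.

Definition reduction_order_compat (B : rel) (gt : rel) : Prop :=
  (forall s, ~ gt s s) /\
  (forall s t u, gt s t -> gt t u -> gt s u) /\
  well_founded (fun t s => gt s t) /\
  (forall s t u p, subterm_at u p <> None -> gt s t ->
                   gt (replace_at u p s) (replace_at u p t)) /\
  (forall s t sigma, gt s t -> gt (app_subst sigma s) (app_subst sigma t)) /\
  (forall s s' t' t, simB B s s' -> gt s' t' -> simB B t' t -> gt s t).

Definition deduce_step (B : rel) (E0 R0 E1 R1 : rel) : Prop :=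
  exists s t, (exists u, rstep R0 u s /\ rstep (union R0 (pm B)) u t)
              /\ seteq E1 (add E0 s t) /\ seteq R1 R0.

Definition orient_step (gt : rel) (E0 R0 E1 R1 : rel) : Prop :=
  exists s t, gt s t /\ disj_add_pm E0 E1 s t /\ seteq R1 (add R0 s t).

Definition delete_step (B : rel) (E0 R0 E1 R1 : rel) : Prop :=
  exists s t, simB B s t /\ disj_add E0 E1 s t /\ seteq R1 R0.

Definition simplify_step (E0 R0 E1 R1 : rel) : Prop :=
  exists E' s t u, disj_add_pm E0 E' s t /\ rstep R0 s u
                   /\ seteq E1 (add E' u t) /\ seteq R1 R0.

Definition collapse_step (E0 R0 E1 R1 : rel) : Prop :=
  exists s t u, disj_add R0 R1 s t /\ rstep R1 s u /\ seteq E1 (add E0 u t).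

Definition compose_step (E0 R0 E1 R1 : rel) : Prop :=
  exists R' s t u, disj_add R0 R' s t /\ rstep R' t u
                   /\ seteq R1 (add R' s u) /\ seteq E1 E0.

Definition IB_step (gt B : rel) (E0 R0 E1 R1 : rel) : Prop :=
  deduce_step B E0 R0 E1 R1 \/ orient_step gt E0 R0 E1 R1 \/
  delete_step B E0 R0 E1 R1 \/ simplify_step E0 R0 E1 R1 \/
  collapse_step E0 R0 E1 R1 \/ compose_step E0 R0 E1 R1.

Definition collapse_applicable (E R : rel) : Prop :=
  exists E' R', collapse_step E R E' R'.

Definition compose_applicable (E R : rel) : Prop :=
  exists E' R', compose_step E R E' R'.

Definition is_run (gt B : rel) (E : rel) (Es Rs : nat -> rel) (n : nat) : Prop :=
  seteq (Es 0) E /\ seteq (Rs 0) empty_rel /\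
  forall i, i < n -> IB_step gt B (Es i) (Rs i) (Es (S i)) (Rs (S i)).

Definition linear (t : term) : Prop :=
  forall x p q, subterm_at t p = Some (Var x) -> subterm_at t q = Some (Var x) -> p = q.

Definition left_linear (R : rel) : Prop := forall l r, R l r -> linear l.

Definition variant (l' r' l r : term) : Prop :=
  exists rho rho' : var -> var,
    (forall x, rho' (rho x) = x /\ rho (rho' x) = x) /\
    l' = app_subst (fun x => Var (rho x)) l /\ r' = app_subst (fun x => Var (rho x)) r.

Definition is_mgu (sigma : subst) (s t : term) : Prop :=
  app_subst sigma s = app_subst sigma t /\
  forall tau, app_subst tau s = app_subst tau t ->
    exists delta, forall x, tau x = app_subst delta (sigma x).

Definition overlap (R1 R2 : rel) (l1 r1 : term) (p : pos) (l2 r2 : term) : Prop :=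
  (exists a b, R1 a b /\ variant l1 r1 a b) /\
  (exists a b, R2 a b /\ variant l2 r2 a b) /\
  (forall x, (occurs x l1 \/ occurs x r1) -> ~ (occurs x l2 \/ occurs x r2)) /\
  (exists u, subterm_at l2 p = Some u /\ (forall x, u <> Var x) /\
             exists sigma, app_subst sigma l1 = app_subst sigma u) /\
  (p = [] -> ~ variant l1 r1 l2 r2).

(* prime critical pairs (w.r.t. the TRS R) from overlaps of R1 on R2 *)
Definition pcp_of (R : rel) (R1 R2 : rel) : rel := fun s t =>
  exists l1 r1 p l2 r2 sigma u,
    overlap R1 R2 l1 r1 p l2 r2 /\
    subterm_at l2 p = Some u /\ is_mgu sigma l1 u /\
    (forall q v, q <> [] -> subterm_at (app_subst sigma u) q = Some v -> normal_form R v) /\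
    s = replace_at (app_subst sigma l2) p (app_subst sigma r1) /\
    t = app_subst sigma r2.

Definition PCP (R : rel) : rel := pcp_of R R R.

Definition PCP_pm (R B : rel) : rel :=
  union (pcp_of R R (pm B)) (pcp_of R (pm B) R).

Definition fair (B : rel) (Es Rs : nat -> rel) (n : nat) : Prop :=
  left_linear (Rs n) /\
  forall s t, union (PCP (Rs n)) (PCP_pm (Rs n) B) s t ->
    joinable_mod (Rs n) B s t \/ exists i, i <= n /\ sstep (Es i) s t.

End TRS.

Arguments empty_rel {F}.

(* Every rule produced by the run is oriented by [>], so [R] terminates modulo [B].
   Church-Rosser modulo [B] follows by well-founded induction on [>] in the manner of Newman's
   lemma: it suffices that, at each term [w], all local peaks R/R and R/B are joinable when
   normal forms are unique modulo [B] below [w]. A peak is disjoint, a variable overlap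
   (joinable by left-linearity of [R] and variable preservation of [B]), or, after descending to
   the innermost redex by induction on size, an instance of a prime critical pair. Fairness makes
   such a pair joinable or an instance of an equation of some [E_i], and every [E_i] step below
   [w] is joinable, because each inference of [I_B] reflects this property backwards along the
   run and [E_n] is empty. Finally, no Collapse gives left-reducedness, no Compose makes every
   right-hand side [R]-normal, and Church-Rosser together with [l > r] lifts this to normality
   modulo [B]. *)

From Stdlib Require Import List Relations Lia PeanoNat Classical FunctionalExtensionality PropExtensionality.
Import ListNotations.

Section Positions.
Context {F : Type}.
Notation T := (@term F).

Fixpoint term_nested_ind (P : T -> Prop) (Hv : forall x, P (Var x))
  (Hf : forall f ts, Forall P ts -> P (Fun f ts)) (t : T) : P t :=
  match t with
  | Var x => Hv x
  | Fun f ts => Hf f ts ((fix go (l : list T) : Forall P l :=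
       match l with
       | [] => @Forall_nil _ P
       | u :: l' => @Forall_cons _ P u l' (term_nested_ind P Hv Hf u) (go l')
       end) ts)
  end.

Lemma nth_error_update_nth_eq {A} (g : A -> A) i l :
  nth_error (update_nth g i l) i = option_map g (nth_error l i).
Proof. revert i; induction l; intros [|i]; simpl; auto. Qed.

Lemma nth_error_update_nth_neq {A} (g : A -> A) i j l :
  i <> j -> nth_error (update_nth g i l) j = nth_error l j.
Proof.
  revert i j; induction l; intros [|i] [|j] H; simpl; auto; congruence || (apply IHl; congruence).
Qed.

Lemma update_nth_ext_at {A} (g h : A -> A) i l a :
  nth_error l i = Some a -> g a = h a -> update_nth g i l = update_nth h i l.
Proof. revert i; induction l; intros [|i] H1 H2; simpl in *; try congruence. f_equal; auto. Qed.

Lemma update_nth_ext {A} (g h : A -> A) i l :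
  (forall a, g a = h a) -> update_nth g i l = update_nth h i l.
Proof. revert i; induction l; intros [|i] H; simpl in *; f_equal; auto. Qed.

Lemma update_nth_id {A} (g : A -> A) i l a :
  nth_error l i = Some a -> g a = a -> update_nth g i l = l.
Proof. revert i; induction l; intros [|i] H1 H2; simpl in *; try congruence. f_equal; eauto. Qed.

Lemma update_nth_out_of_range {A} (g : A -> A) i l :
  nth_error l i = None -> update_nth g i l = l.
Proof. revert i; induction l; intros [|i] H1; simpl in *; try congruence. f_equal; eauto. Qed.

Lemma update_nth_update_nth {A} (g h : A -> A) i l :
  update_nth g i (update_nth h i l) = update_nth (fun x => g (h x)) i l.
Proof. revert i; induction l; intros [|i]; simpl; f_equal; auto. Qed.

Lemma update_nth_comm {A} (g h : A -> A) i j l :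
  i <> j -> update_nth g i (update_nth h j l) = update_nth h j (update_nth g i l).
Proof. revert i j; induction l; intros [|i] [|j] H; simpl; try congruence; f_equal; auto. Qed.

Lemma map_update_nth {A B} (f : A -> B) (g : A -> A) (g' : B -> B) i l :
  (forall a, nth_error l i = Some a -> f (g a) = g' (f a)) ->
  map f (update_nth g i l) = update_nth g' i (map f l).
Proof. revert i; induction l; intros [|i] H; simpl in *; f_equal; auto. Qed.

Lemma update_nth_middle {A} (g : A -> A) pre a post :
  update_nth g (length pre) (pre ++ a :: post) = pre ++ g a :: post.
Proof. induction pre; simpl; f_equal; auto. Qed.

Lemma nth_error_middle {A} (pre : list A) a post :
  nth_error (pre ++ a :: post) (length pre) = Some a.
Proof. induction pre; simpl; auto. Qed.

Lemma replace_at_nil (t s : T) : replace_at t [] s = s.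
Proof. destruct t; reflexivity. Qed.

Lemma subterm_at_app_Some (t u : T) p q :
  subterm_at t p = Some u -> subterm_at t (p ++ q) = subterm_at u q.
Proof.
  revert t; induction p as [|i p IH]; intros t H; simpl in *; [congruence|].
  destruct t; [discriminate|]. destruct (nth_error l i); [auto|discriminate].
Qed.

Lemma replace_at_app (t u s : T) p q :
  subterm_at t p = Some u -> replace_at t (p ++ q) s = replace_at t p (replace_at u q s).
Proof.
  revert t; induction p as [|i p IH]; intros t H.
  - simpl in *. inversion H; subst. rewrite replace_at_nil; reflexivity.
  - destruct t; simpl in H; [discriminate|]. destruct (nth_error l i) eqn:E; [|discriminate].
    simpl. f_equal. apply update_nth_ext_at with t; auto.
Qed.

Lemma subterm_at_replace_at (t s : T) p :
  subterm_at t p <> None -> subterm_at (replace_at t p s) p = Some s.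
Proof.
  revert t; induction p as [|i p IH]; intros t H; simpl in *; rewrite ?replace_at_nil; auto.
  destruct t; [congruence|]. simpl. rewrite nth_error_update_nth_eq.
  destruct (nth_error l i) eqn:E; simpl; [|congruence]. auto.
Qed.

Lemma replace_at_subterm_at (t u : T) p :
  subterm_at t p = Some u -> replace_at t p u = t.
Proof.
  revert t; induction p as [|i p IH]; intros t H; simpl in *; rewrite ?replace_at_nil; [congruence|].
  destruct t; [discriminate|]. destruct (nth_error l i) eqn:E; [|discriminate].
  simpl; f_equal. apply update_nth_id with t; auto.
Qed.

Lemma replace_at_replace_at (t a b : T) p :
  replace_at (replace_at t p a) p b = replace_at t p b.
Proof.
  revert t; induction p as [|i p IH]; intros t; simpl; rewrite ?replace_at_nil; auto.
  destruct t; auto. simpl; f_equal. rewrite update_nth_update_nth.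
  destruct (nth_error l i) eqn:E.
  - apply update_nth_ext_at with t; auto.
  - rewrite !update_nth_out_of_range; auto.
Qed.

Definition parallel (p1 p2 : pos) : Prop :=
  exists c i j q1 q2, i <> j /\ p1 = c ++ i :: q1 /\ p2 = c ++ j :: q2.

Lemma parallel_sym p1 p2 : parallel p1 p2 -> parallel p2 p1.
Proof. intros (c&i&j&q1&q2&H&->&->). exists c, j, i, q2, q1; auto. Qed.

Lemma pos_trichotomy (p1 p2 : pos) :
  (exists q, p2 = p1 ++ q) \/ (exists q, p1 = p2 ++ q) \/ parallel p1 p2.
Proof.
  revert p2; induction p1 as [|i p1 IH]; intros p2.
  - left; exists p2; auto.
  - destruct p2 as [|j p2].
    + right; left; exists (i :: p1); auto.
    + destruct (Nat.eq_dec i j) as [<-|Hij].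
      * destruct (IH p2) as [[q ->]|[[q ->]|(c&a&b&q1&q2&H&->&->)]].
        -- left; exists q; auto.
        -- right; left; exists q; auto.
        -- right; right; exists (i :: c), a, b, q1, q2; auto.
      * right; right; exists [], i, j, p1, p2; auto.
Qed.

Lemma subterm_at_replace_parallel (t a : T) p1 p2 :
  parallel p1 p2 -> subterm_at (replace_at t p1 a) p2 = subterm_at t p2.
Proof.
  intros (c&i&j&q1&q2&Hij&->&->).
  revert t; induction c as [|k c IH]; intros t; simpl.
  - destruct t; simpl; auto. rewrite nth_error_update_nth_neq; auto.
  - destruct t; simpl; auto. destruct (nth_error l k) eqn:E.
    + rewrite nth_error_update_nth_eq, E; simpl. auto.
    + rewrite update_nth_out_of_range by auto. rewrite E; auto.
Qed.

Lemma replace_at_parallel_comm (t a b : T) p1 p2 :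
  parallel p1 p2 -> replace_at (replace_at t p1 a) p2 b = replace_at (replace_at t p2 b) p1 a.
Proof.
  intros (c&i&j&q1&q2&Hij&->&->).
  revert t; induction c as [|k c IH]; intros t; simpl.
  - destruct t; simpl; auto. f_equal. rewrite update_nth_comm; auto.
  - destruct t; simpl; auto. f_equal. rewrite !update_nth_update_nth. apply update_nth_ext; auto.
Qed.

Fixpoint size (t : T) : nat :=
  match t with Var _ => 1 | Fun _ ts => S (list_sum (map size ts)) end.

Lemma list_sum_In (l : list nat) x : In x l -> x <= list_sum l.
Proof. induction l; simpl; intros []; subst; try lia. specialize (IHl H); lia. Qed.

Lemma size_subterm_at (t u : T) p :
  subterm_at t p = Some u -> size u <= size t /\ (p <> [] -> size u < size t).
Proof.
  revert t; induction p as [|i p IH]; intros t H; simpl in H.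
  - inversion H; subst; split; [lia|congruence].
  - destruct t; [discriminate|]. destruct (nth_error l i) eqn:E; [|discriminate].
    destruct (IH _ H) as [H1 _].
    assert (size t <= list_sum (map size l)).
    { apply list_sum_In, in_map. eapply nth_error_In; eauto. }
    simpl; split; [|intros _]; lia.
Qed.

End Positions.

Section Substitutions.
Context {F : Type}.
Notation T := (@term F).

Lemma app_subst_comp (t : T) (s1 s2 : subst) :
  app_subst s2 (app_subst s1 t) = app_subst (fun x => app_subst s2 (s1 x)) t.
Proof.
  induction t using term_nested_ind; simpl; auto. f_equal. rewrite map_map.
  induction H; simpl; f_equal; auto.
Qed.

Lemma app_subst_ext (t : T) (s1 s2 : subst) :
  (forall x, occurs x t -> s1 x = s2 x) -> app_subst s1 t = app_subst s2 t.
Proof.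
  induction t using term_nested_ind; intros Hx; simpl.
  - apply Hx; constructor.
  - f_equal. induction H; simpl; auto. f_equal.
    + apply H. intros y Hy. apply Hx. econstructor; [left; reflexivity|auto].
    + apply IHForall. intros y Hy. apply Hx. inversion Hy; subst. econstructor; [right; eauto|auto].
Qed.

Lemma app_subst_agree (t : T) (s1 s2 : subst) x :
  app_subst s1 t = app_subst s2 t -> occurs x t -> s1 x = s2 x.
Proof.
  intros H Ho. induction Ho; simpl in H; auto.
  injection H; intros Hm. apply IHHo.
  clear -H0 Hm. induction ts; simpl in *; [contradiction|].
  injection Hm; intros; destruct H0; subst; auto.
Qed.

Lemma app_subst_Var (t : T) : app_subst (fun x => Var x) t = t.
Proof.
  induction t using term_nested_ind; simpl; auto. f_equal. induction H; simpl; f_equal; auto.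
Qed.

Lemma occurs_app_subst (t : T) s y :
  occurs y (app_subst s t) -> exists x, occurs x t /\ occurs y (s x).
Proof.
  induction t using term_nested_ind; simpl; intros Ho.
  - exists x; split; auto. constructor.
  - inversion Ho; subst. apply in_map_iff in H2 as (u&<-&Hu).
    rewrite Forall_forall in H. destruct (H u Hu H3) as (x&Hx1&Hx2).
    exists x; split; auto. econstructor; eauto.
Qed.

Lemma occurs_subterm_at (t : T) x : occurs x t -> exists p, subterm_at t p = Some (Var x).
Proof.
  induction 1.
  - exists []; reflexivity.
  - destruct IHoccurs as (p&Hp). apply In_nth_error in H as (i&Hi).
    exists (i :: p); simpl. rewrite Hi; auto.
Qed.

Lemma subterm_at_occurs (t u : T) p x : subterm_at t p = Some u -> occurs x u -> occurs x t.
Proof.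
  revert t; induction p as [|i p IH]; intros t H Ho; simpl in H.
  - congruence.
  - destruct t; [discriminate|]. destruct (nth_error l i) eqn:E; [|discriminate].
    econstructor; [eapply nth_error_In; eauto| eauto].
Qed.

Lemma subterm_at_app_subst (t u : T) p s :
  subterm_at t p = Some u -> subterm_at (app_subst s t) p = Some (app_subst s u).
Proof.
  revert t; induction p as [|i p IH]; intros t H; simpl in *.
  - congruence.
  - destruct t; [discriminate|]. simpl. rewrite nth_error_map.
    destruct (nth_error l i); simpl; [auto|discriminate].
Qed.

Lemma app_subst_replace_at (t r : T) p s :
  subterm_at t p <> None ->
  app_subst s (replace_at t p r) = replace_at (app_subst s t) p (app_subst s r).
Proof.
  revert t; induction p as [|i p IH]; intros t H; simpl in *.
  - rewrite !replace_at_nil; auto.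
  - destruct t; [congruence|]. simpl. f_equal.
    apply map_update_nth. intros a Ha. rewrite Ha in H. auto.
Qed.

Lemma subterm_at_app_subst_inv (t v : T) p s :
  subterm_at (app_subst s t) p = Some v ->
  (exists u, subterm_at t p = Some u /\ (forall x, u <> Var x) /\ v = app_subst s u) \/
  (exists p1 p2 x, p = p1 ++ p2 /\ subterm_at t p1 = Some (Var x) /\ subterm_at (s x) p2 = Some v).
Proof.
  revert t; induction p as [|i p IH]; intros t H.
  - destruct t.
    + right. exists [], [], v0; simpl in *; auto.
    + left. exists (Fun f l); simpl in *; split; auto; split; [congruence|]. congruence.
  - destruct t.
    + right. exists [], (i :: p), v0; simpl in *; auto.
    + simpl in H. rewrite nth_error_map in H.
      destruct (nth_error l i) eqn:E; simpl in H; [|discriminate].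
      destruct (IH _ H) as [(u&H1&H2&H3)|(p1&p2&x&->&H1&H2)].
      * left. exists u; simpl; rewrite E; auto.
      * right. exists (i :: p1), p2, x; simpl; rewrite E; auto.
Qed.

Lemma size_lt_app_subst (t : T) x sg : occurs x t -> t <> Var x -> size (sg x) < size (app_subst sg t).
Proof.
  intros Ho Hne. destruct (occurs_subterm_at _ _ Ho) as ([|i p]&Hp); [simpl in Hp; congruence|].
  apply (subterm_at_app_subst _ _ _ sg) in Hp. apply size_subterm_at in Hp. apply Hp; congruence.
Qed.

End Substitutions.

Section Closure.
Context {F : Type}.
Notation T := (@term F).
Implicit Types (E Rl : @rel F).

Definition closed_under_contexts Rl :=
  forall (u s t : T) p, Rl s t -> subterm_at u p = Some s -> Rl u (replace_at u p t).
Definition closed_under_substs Rl :=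
  forall (s t : T) sg, Rl s t -> Rl (app_subst sg s) (app_subst sg t).

Lemma closed_under_contexts_replace_at Rl (u s t : T) p :
  closed_under_contexts Rl -> Rl s t -> subterm_at u p <> None ->
  Rl (replace_at u p s) (replace_at u p t).
Proof.
  intros H Hst Hv. rewrite <- (replace_at_replace_at u s t p).
  apply (H _ s); auto. apply subterm_at_replace_at; auto.
Qed.

Lemma rstep_at E l r (v : T) p sg : E l r -> subterm_at v p = Some (app_subst sg l) ->
  rstep E v (replace_at v p (app_subst sg r)).
Proof. intros; exists l, r, p, sg; auto. Qed.

Lemma rstep_replace_at E l r (v : T) p s : subterm_at v p <> None -> E l r ->
  rstep E (replace_at v p (app_subst s l)) (replace_at v p (app_subst s r)).
Proof.
  intros Hv H. rewrite <- (replace_at_replace_at v (app_subst s l) (app_subst s r)).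
  apply rstep_at with l; auto. apply subterm_at_replace_at; auto.
Qed.

Lemma rstep_closed_under_contexts E : closed_under_contexts (rstep E).
Proof.
  intros u s t p (l&r&q&sg&Hlr&Hq&->) Hp.
  exists l, r, (p ++ q), sg. split; auto. split.
  - erewrite subterm_at_app_Some; eauto.
  - erewrite replace_at_app; eauto.
Qed.

Lemma rstep_closed_under_substs E : closed_under_substs (rstep E).
Proof.
  intros s t sg (l&r&q&s1&Hlr&Hq&->).
  exists l, r, q, (fun x => app_subst sg (s1 x)). split; auto. split.
  - rewrite <- app_subst_comp. apply subterm_at_app_subst; auto.
  - rewrite app_subst_replace_at by congruence. rewrite app_subst_comp; auto.
Qed.

Lemma rstep_instance E (s u x : T) p sg : rstep E s u -> subterm_at x p = Some (app_subst sg s) ->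
  rstep E x (replace_at x p (app_subst sg u)).
Proof.
  intros H Hp. apply (rstep_closed_under_contexts E x (app_subst sg s)); auto.
  apply rstep_closed_under_substs; auto.
Qed.

Lemma rt_closed_under_contexts Rl :
  closed_under_contexts Rl -> closed_under_contexts (clos_refl_trans _ Rl).
Proof.
  intros H u s t p Hst. revert u. induction Hst; intros u Hu.
  - apply rt_step; eauto.
  - rewrite replace_at_subterm_at by eauto. apply rt_refl.
  - eapply rt_trans; [apply IHHst1; eauto|].
    rewrite <- (replace_at_replace_at u y z p). apply IHHst2.
    apply subterm_at_replace_at; congruence.
Qed.

Lemma rt_closed_under_substs Rl :
  closed_under_substs Rl -> closed_under_substs (clos_refl_trans _ Rl).
Proof.
  intros H s t sg Hst. induction Hst.
  - apply rt_step; auto.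
  - apply rt_refl.
  - eapply rt_trans; eauto.
Qed.

Lemma sstep_closed_under_contexts E : closed_under_contexts (sstep E).
Proof.
  intros u s t p [H|H] Hp.
  - left; eapply rstep_closed_under_contexts; eauto.
  - right. rewrite <- (replace_at_subterm_at _ _ _ Hp) at 2.
    apply closed_under_contexts_replace_at; [apply rstep_closed_under_contexts|auto|congruence].
Qed.

Lemma sstep_closed_under_substs E : closed_under_substs (sstep E).
Proof. intros s t sg [H|H]; [left|right]; apply rstep_closed_under_substs; auto. Qed.

Lemma rsteps_closed_under_contexts E : closed_under_contexts (rsteps E).
Proof. apply rt_closed_under_contexts, rstep_closed_under_contexts. Qed.
Lemma rsteps_closed_under_substs E : closed_under_substs (rsteps E).
Proof. apply rt_closed_under_substs, rstep_closed_under_substs. Qed.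
Lemma conv_closed_under_contexts E : closed_under_contexts (conv E).
Proof. apply rt_closed_under_contexts, sstep_closed_under_contexts. Qed.
Lemma conv_closed_under_substs E : closed_under_substs (conv E).
Proof. apply rt_closed_under_substs, sstep_closed_under_substs. Qed.

Lemma rsteps_trans E (x y z : T) : rsteps E x y -> rsteps E y z -> rsteps E x z.
Proof. apply rt_trans. Qed.

Lemma closed_replace_at_instance Rl (s t v : T) p dl :
  closed_under_contexts Rl -> closed_under_substs Rl -> subterm_at v p <> None -> Rl s t ->
  Rl (replace_at v p (app_subst dl s)) (replace_at v p (app_subst dl t)).
Proof. intros Hc Hs Hv H. apply closed_under_contexts_replace_at; auto. Qed.

Lemma sstep_sym E (s t : T) : sstep E s t -> sstep E t s.
Proof. intros [H|H]; [right|left]; auto. Qed.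

Lemma conv_sym E (s t : T) : conv E s t -> conv E t s.
Proof.
  induction 1.
  - apply rt_step, sstep_sym; auto.
  - apply rt_refl.
  - eapply rt_trans; eauto.
Qed.

Lemma rstep_mono E E' (s t : T) : (forall a b, E a b -> E' a b) -> rstep E s t -> rstep E' s t.
Proof. intros H (l&r&p&sg&H1&H2&H3). exists l, r, p, sg; auto. Qed.

Lemma conv_mono E E' (s t : T) : (forall a b, E a b -> E' a b) -> conv E s t -> conv E' s t.
Proof.
  intros H. induction 1.
  - apply rt_step. destruct H0; [left|right]; eapply rstep_mono; eauto.
  - apply rt_refl.
  - eapply rt_trans; eauto.
Qed.

Lemma rstep_union E E' (s t : T) : rstep (union E E') s t -> rstep E s t \/ rstep E' s t.
Proof. intros (l&r&p&sg&[H1|H1]&H2&H3); [left|right]; exists l, r, p, sg; auto. Qed.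

Lemma rstep_pm E (s t : T) : rstep (pm E) s t <-> sstep E s t.
Proof.
  assert (Hrev : forall E' s t, rstep E' s t -> rstep (fun a b => E' b a) t s).
  { intros E' s0 t0 (l&r&p&sg&H1&H2&->). rewrite <- (replace_at_subterm_at _ _ _ H2) at 2.
    apply rstep_replace_at; [congruence|auto]. }
  split.
  - intros H. apply rstep_union in H as [H|H]; [left; auto|right].
    apply Hrev in H. eapply rstep_mono; [|exact H]; auto.
  - intros [H|H]; [eapply rstep_mono; [|exact H]; intros a b; left; auto|].
    apply Hrev in H. eapply rstep_mono; [|exact H]. intros a b; right; auto.
Qed.

Lemma closed_under_contexts_Fun Rl f pre post (a b : T) : closed_under_contexts Rl -> Rl a b ->
  Rl (Fun f (pre ++ a :: post)) (Fun f (pre ++ b :: post)).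
Proof.
  intros H Hab.
  assert (E1 : subterm_at (Fun f (pre ++ a :: post)) [length pre] = Some a).
  { simpl. rewrite nth_error_middle. reflexivity. }
  specialize (H _ _ _ _ Hab E1). simpl in H. rewrite update_nth_middle, replace_at_nil in H. exact H.
Qed.

Lemma rt_Fun_args Rl f (ts ts' : list T) : closed_under_contexts Rl ->
  Forall2 (clos_refl_trans _ Rl) ts ts' -> clos_refl_trans _ Rl (Fun f ts) (Fun f ts').
Proof.
  intros H H2. change ts with ([] ++ ts). change ts' with ([] ++ ts').
  generalize (@nil T) as pre. induction H2; intros pre.
  - apply rt_refl.
  - eapply rt_trans.
    + apply (@closed_under_contexts_Fun (clos_refl_trans _ Rl));
        [apply rt_closed_under_contexts; auto|eauto].
    + specialize (IHForall2 (pre ++ [y])). rewrite <- !app_assoc in IHForall2. exact IHForall2.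
Qed.

Lemma Forall2_update_nth_map {A B} (P : A -> A -> Prop) (f1 f2 : B -> A) g i (ls : list B) :
  (forall j l, nth_error ls j = Some l -> j <> i -> P (f1 l) (f2 l)) ->
  (forall l, nth_error ls i = Some l -> P (g (f1 l)) (f2 l)) ->
  Forall2 P (update_nth g i (map f1 ls)) (map f2 ls).
Proof.
  revert i; induction ls as [|b ls IH]; intros i H1 H2; simpl; [destruct i; constructor|].
  destruct i as [|i]; simpl.
  - constructor; [apply H2; auto|].
    assert (H3 : forall j l, nth_error ls j = Some l -> P (f1 l) (f2 l))
      by (intros j l Hj; apply (H1 (S j)); auto).
    clear -H3. induction ls; simpl; constructor.
    + apply (H3 0); auto.
    + apply IHls. intros j l Hj; apply (H3 (S j)); auto.
  - constructor; [apply (H1 0); auto|].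
    apply IH.
    + intros j l Hj Hji. apply (H1 (S j)); auto.
    + intros l Hl; apply H2; auto.
Qed.

Lemma Forall2_eq {A} (l1 l2 : list A) : Forall2 eq l1 l2 -> l1 = l2.
Proof. induction 1; subst; auto. Qed.

Lemma rt_app_subst_pointwise Rl (t : T) s1 s2 : closed_under_contexts Rl ->
  (forall x, clos_refl_trans _ Rl (s1 x) (s2 x)) ->
  clos_refl_trans _ Rl (app_subst s1 t) (app_subst s2 t).
Proof.
  intros Hc Hx. induction t using term_nested_ind; simpl; auto.
  apply rt_Fun_args; auto. rewrite Forall_forall in H.
  induction ts; simpl; constructor; [apply H; simpl|apply IHts]; auto.
  intros; apply H; simpl; auto.
Qed.

Lemma rt_replace_var_pointwise Rl (l : T) p x s1 s2 : closed_under_contexts Rl ->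
  subterm_at l p = Some (Var x) ->
  (forall y, clos_refl_trans _ Rl (s1 y) (s2 y)) ->
  clos_refl_trans _ Rl (replace_at (app_subst s1 l) p (s2 x)) (app_subst s2 l).
Proof.
  intros Hc. revert p. induction l using term_nested_ind; intros p Hp Hx.
  - destruct p; simpl in Hp; [|discriminate]. inversion Hp; subst.
    rewrite replace_at_nil; apply rt_refl.
  - destruct p as [|i p]; simpl in Hp; [discriminate|].
    destruct (nth_error ts i) eqn:E; [|discriminate].
    simpl. apply rt_Fun_args; auto. apply Forall2_update_nth_map.
    + intros j l Hj _. apply rt_app_subst_pointwise; auto.
    + intros l Hl. rewrite Hl in E; inversion E; subst.
      rewrite Forall_forall in H. apply H; auto. eapply nth_error_In; eauto.
Qed.

Definition upd (sg : subst) (x : var) (s : T) : subst :=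
  fun y => if Nat.eq_dec y x then s else sg y.

Lemma replace_at_unique_var (l : T) p x sg s :
  subterm_at l p = Some (Var x) ->
  (forall q, subterm_at l q = Some (Var x) -> q = p) ->
  replace_at (app_subst sg l) p s = app_subst (upd sg x s) l.
Proof.
  revert p. induction l using term_nested_ind; intros p Hp Hu.
  - destruct p; simpl in Hp; [|discriminate]. inversion Hp; subst.
    rewrite replace_at_nil. unfold upd; simpl. destruct Nat.eq_dec; congruence.
  - destruct p as [|i p]; simpl in Hp; [discriminate|].
    destruct (nth_error ts i) eqn:E; [|discriminate].
    simpl. f_equal. apply Forall2_eq. apply Forall2_update_nth_map.
    + intros j l Hj Hji. apply app_subst_ext. intros y Hy. unfold upd.
      destruct Nat.eq_dec; auto. subst y. exfalso.
      destruct (occurs_subterm_at _ _ Hy) as (q&Hq). assert (j :: q = i :: p); [|congruence].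
      apply Hu. simpl. rewrite Hj; auto.
    + intros l Hl. rewrite Hl in E; inversion E; subst.
      rewrite Forall_forall in H. apply H; auto. eapply nth_error_In; eauto.
      intros q Hq. assert (i :: q = i :: p); [|congruence]. apply Hu; simpl; rewrite Hl; auto.
Qed.

End Closure.

Section Unification.
Context {F : Type}.
Notation T := (@term F).

Fixpoint vars (t : T) : list var :=
  match t with Var x => [x] | Fun _ ts => concat (map vars ts) end.

Lemma in_vars (t : T) x : In x (vars t) <-> occurs x t.
Proof.
  induction t using term_nested_ind; simpl.
  - split; [intros [->|[]]; constructor|intros H; inversion H; auto].
  - rewrite in_concat. split.
    + intros (l&Hl&Hx). apply in_map_iff in Hl as (u&<-&Hu).
      rewrite Forall_forall in H. econstructor; eauto. apply H; auto.
    + intros Ho; inversion Ho; subst. rewrite Forall_forall in H.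
      exists (vars t); split; [apply in_map; auto| apply H; auto].
Qed.

Definition eqns := list (T * T).
Definition unif (sg : subst) (E : eqns) :=
  Forall (fun e => app_subst sg (fst e) = app_subst sg (snd e)) E.
Definition is_mgu_l (sg : subst) (E : eqns) :=
  unif sg E /\ forall tau, unif tau E -> exists delta, forall x, tau x = app_subst delta (sg x).
Definition has_mgu_if_unifiable (E : eqns) :=
  (exists th, unif th E) -> exists sg, is_mgu_l sg E.

Definition eqvars (E : eqns) := concat (map (fun e => vars (fst e) ++ vars (snd e)) E).
Definition nvars (E : eqns) := length (nodup Nat.eq_dec (eqvars E)).
Definition esize (E : eqns) := list_sum (map (fun e => size (fst e) + size (snd e)) E).

Lemma in_eqvars_cons e E y :
  In y (eqvars (e :: E)) <-> occurs y (fst e) \/ occurs y (snd e) \/ In y (eqvars E).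
Proof. unfold eqvars; simpl; rewrite !in_app_iff, !in_vars; tauto. Qed.

Lemma in_eqvars_app E1 E2 y : In y (eqvars (E1 ++ E2)) <-> In y (eqvars E1) \/ In y (eqvars E2).
Proof. unfold eqvars; rewrite map_app, concat_app, in_app_iff; tauto. Qed.

Lemma in_eqvars_combine f (ss ts : list T) y : In y (eqvars (combine ss ts)) ->
  occurs y (Fun f ss) \/ occurs y (Fun f ts).
Proof.
  rewrite <- !in_vars. simpl. rewrite !in_concat.
  revert ts; induction ss as [|a ss IH]; intros [|t ts]; simpl; try tauto.
  rewrite in_eqvars_cons, <- !in_vars; simpl. intros [H|[H|H]].
  - left; eauto.
  - right; eauto.
  - destruct (IH ts H) as [(l&?&?)|(l&?&?)]; [left|right]; eauto.
Qed.

Lemma nvars_le E1 E2 : incl (eqvars E1) (eqvars E2) -> nvars E1 <= nvars E2.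
Proof.
  intros H. unfold nvars. apply NoDup_incl_length; [apply NoDup_nodup|].
  intros y Hy. apply nodup_In. apply nodup_In in Hy. auto.
Qed.

Lemma nvars_lt E1 E2 x : (forall y, In y (eqvars E1) -> In y (eqvars E2) /\ y <> x) ->
  In x (eqvars E2) -> nvars E1 < nvars E2.
Proof.
  intros H Hx. unfold nvars.
  eapply Nat.le_lt_trans; [|apply (remove_length_lt Nat.eq_dec (nodup Nat.eq_dec (eqvars E2)) x)].
  - apply NoDup_incl_length; [apply NoDup_nodup|].
    intros y Hy. apply nodup_In in Hy. destruct (H y Hy).
    apply in_in_remove; auto. apply nodup_In; auto.
  - apply nodup_In; auto.
Qed.

Lemma in_eqvars_In E e y : In e E -> occurs y (fst e) \/ occurs y (snd e) -> In y (eqvars E).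
Proof.
  intros He Hy. unfold eqvars. apply in_concat. eexists.
  split; [apply in_map_iff; exists e; split; [reflexivity|exact He]|].
  rewrite in_app_iff, !in_vars; auto.
Qed.

Lemma in_eqvars_map (E : eqns) rho y :
  In y (eqvars (map (fun e => (app_subst rho (fst e), app_subst rho (snd e))) E)) ->
  exists e, In e E /\ (occurs y (app_subst rho (fst e)) \/ occurs y (app_subst rho (snd e))).
Proof.
  induction E; simpl; [unfold eqvars; simpl; tauto|].
  rewrite in_eqvars_cons; simpl. intros [H|[H|H]]; eauto.
  destruct (IHE H) as (e&?&?); eauto.
Qed.

Lemma unif_combine sg (ss ts : list T) : length ss = length ts ->
  (unif sg (combine ss ts) <-> map (app_subst sg) ss = map (app_subst sg) ts).
Proof.
  revert ts; induction ss; intros [|t ts] Hl; simpl in *; try discriminate.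
  - split; auto; constructor.
  - unfold unif in *. rewrite Forall_cons_iff, IHss by congruence. simpl.
    split; [intros [-> ->]; auto|intros H; injection H; auto].
Qed.

Lemma esize_combine (ss ts : list T) : length ss = length ts ->
  esize (combine ss ts) = list_sum (map size ss) + list_sum (map size ts).
Proof.
  revert ts; induction ss; intros [|t ts] Hl; simpl in *; try discriminate; auto.
  unfold esize in *; simpl. rewrite IHss by congruence. lia.
Qed.

Lemma unif_map_app_subst sg rho (E : eqns) :
  unif sg (map (fun e => (app_subst rho (fst e), app_subst rho (snd e))) E) <->
  unif (fun y => app_subst sg (rho y)) E.
Proof.
  unfold unif. rewrite Forall_map. simpl.
  split; apply Forall_impl; intros e; rewrite !app_subst_comp; auto.
Qed.

Lemma lex_measure_ind {A} (f g : A -> nat) (P : A -> Prop) :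
  (forall a, (forall b, f b < f a -> P b) -> (forall b, f b <= f a -> g b < g a -> P b) -> P a) ->
  forall a, P a.
Proof.
  intros H. assert (Main : forall N M a, f a < N -> g a < M -> P a).
  { induction N as [|N IHN]; [lia|]. induction M as [|M IHM]; [lia|].
    intros a Hf Hg. apply H; intros b Hb.
    - apply (IHN (S (g b))); lia.
    - intros Hgb. apply IHM; lia. }
  intros a. apply (Main (S (f a)) (S (g a))); lia.
Qed.

Lemma has_mgu_transfer E E' : (forall sg, unif sg E <-> unif sg E') ->
  has_mgu_if_unifiable E' -> has_mgu_if_unifiable E.
Proof.
  intros Heq H (th&Hth). destruct H as (sg&H1&H2); [exists th; apply Heq; auto|].
  exists sg; split; [apply Heq; auto|]. intros tau Ht; apply H2, Heq; auto.
Qed.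

Definition elim_subst (x : var) (t : T) : subst := fun y => if Nat.eq_dec y x then t else Var y.
Notation elim_eqns x t E :=
  (map (fun e => (app_subst (elim_subst x t) (fst e), app_subst (elim_subst x t) (snd e))) E).

Lemma app_subst_elim_subst th x t u : th x = app_subst th t ->
  app_subst th (app_subst (elim_subst x t) u) = app_subst th u.
Proof.
  intros H. rewrite app_subst_comp. apply app_subst_ext. intros y _.
  unfold elim_subst; destruct Nat.eq_dec; subst; auto.
Qed.

Lemma nvars_elim_lt x t E : ~ occurs x t -> nvars (elim_eqns x t E) < nvars ((Var x, t) :: E).
Proof.
  intros Hx. apply nvars_lt with x; [|apply in_eqvars_cons; left; constructor].
  intros y Hy. apply in_eqvars_map in Hy as (e&He&Hy).
  assert (Hu : forall u, occurs y (app_subst (elim_subst x t) u) ->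
             (occurs y u \/ occurs y t) /\ y <> x).
  { intros u Hu. apply occurs_app_subst in Hu as (z&Hz&Hyz). unfold elim_subst in Hyz.
    destruct Nat.eq_dec; [subst z; split; [auto|intros ->; auto]|].
    inversion Hyz; subst; auto. }
  rewrite in_eqvars_cons; simpl.
  destruct Hy as [Hy|Hy]; apply Hu in Hy as [[Hy|Hy] Hne];
    (split; [|exact Hne]); eauto using in_eqvars_In.
Qed.

Lemma has_mgu_elim x t E : ~ occurs x t ->
  has_mgu_if_unifiable (elim_eqns x t E) -> has_mgu_if_unifiable ((Var x, t) :: E).
Proof.
  intros Hx IH (th&Hth). inversion Hth as [|? ? Hthx HthE]; subst; simpl in Hthx.
  assert (Hfix : app_subst (elim_subst x t) t = t).
  { transitivity (app_subst (fun y => Var y) t); [|apply app_subst_Var].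
    apply app_subst_ext. intros y Hy.
    unfold elim_subst; destruct Nat.eq_dec; subst; tauto. }
  assert (Hunif : forall tau, tau x = app_subst tau t ->
            unif tau E -> unif tau (elim_eqns x t E)).
  { intros tau Htau HE. apply unif_map_app_subst.
    eapply Forall_impl; [|exact HE]. intros e He; simpl.
    rewrite <- !app_subst_comp, !app_subst_elim_subst; auto. }
  destruct IH as (s'&Hs1&Hs2); [exists th; apply Hunif; auto|].
  exists (fun y => app_subst s' (elim_subst x t y)). split.
  - constructor.
    + simpl. unfold elim_subst at 1. destruct Nat.eq_dec; [|congruence].
      rewrite <- app_subst_comp, Hfix; auto.
    + apply unif_map_app_subst; auto.
  - intros tau Ht. inversion Ht as [|? ? Htx HtE]; subst; simpl in Htx.
    destruct (Hs2 tau (Hunif tau Htx HtE)) as (d&Hd). exists d. intros y.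
    change (tau y) with (app_subst tau (Var y)).
    rewrite <- (app_subst_elim_subst tau x t (Var y)) by auto; simpl.
    rewrite app_subst_comp. apply app_subst_ext. intros z _; auto.
Qed.

Lemma has_mgu_var x t E :
  (forall E', nvars E' < nvars ((Var x, t) :: E) -> has_mgu_if_unifiable E') ->
  (forall E', nvars E' <= nvars ((Var x, t) :: E) -> esize E' < esize ((Var x, t) :: E) ->
     has_mgu_if_unifiable E') ->
  has_mgu_if_unifiable ((Var x, t) :: E).
Proof.
  intros IH1 IH2. destruct (classic (t = Var x)) as [->|Hne].
  - apply has_mgu_transfer with E.
    + intros sg; unfold unif; rewrite Forall_cons_iff; simpl; tauto.
    + apply IH2; [|unfold esize; simpl; lia].
      apply nvars_le. intros y Hy. apply in_eqvars_cons; auto.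
  - destruct (classic (occurs x t)) as [Ho|Hno].
    + intros (th&Hth). exfalso. inversion Hth as [|? ? Hx _]; subst; simpl in Hx.
      pose proof (size_lt_app_subst t x th Ho Hne). rewrite Hx in H. lia.
    + apply has_mgu_elim; auto. apply IH1, nvars_elim_lt; auto.
Qed.

Lemma has_mgu_Fun f ss g ts E :
  (forall E', nvars E' <= nvars ((Fun f ss, Fun g ts) :: E) ->
     esize E' < esize ((Fun f ss, Fun g ts) :: E) -> has_mgu_if_unifiable E') ->
  has_mgu_if_unifiable ((Fun f ss, Fun g ts) :: E).
Proof.
  intros IH [th Hth]. inversion Hth as [|? ? Hhead HE]; subst; simpl in Hhead.
  injection Hhead as <- Hm.
  assert (Hl : length ss = length ts)
    by (rewrite <- (length_map (app_subst th) ss), Hm, length_map; auto).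
  apply (has_mgu_transfer _ (combine ss ts ++ E)); [| |exists th].
  - intros sg. unfold unif. rewrite Forall_app, Forall_cons_iff. fold (unif sg (combine ss ts)).
    rewrite unif_combine by auto. simpl. split; [intros [H ?]; injection H; auto|intros [H ?]; rewrite H; auto].
  - apply IH.
    + apply nvars_le. intros z Hz. apply in_eqvars_app in Hz as [Hz|Hz]; apply in_eqvars_cons; [|auto].
      apply (in_eqvars_combine f) in Hz; simpl; tauto.
    + unfold esize in *. rewrite map_app, list_sum_app. fold (esize (combine ss ts)).
      rewrite esize_combine by auto. simpl. lia.
  - exact Hth.
Qed.

Lemma has_mgu_all (E : eqns) : has_mgu_if_unifiable E.
Proof.
  revert E; apply (lex_measure_ind nvars esize); intros E IH1 IH2.
  destruct E as [|[[x|f ss] [y|g ts]] E].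
  - intros _. exists (fun x => Var x). split; [constructor|].
    intros tau _. exists tau. reflexivity.
  - apply has_mgu_var; auto.
  - apply has_mgu_var; auto.
  - assert (Hswap : forall E', incl (eqvars ((Fun f ss, Var y) :: E')) (eqvars ((Var y, Fun f ss) :: E'))
                     /\ incl (eqvars ((Var y, Fun f ss) :: E')) (eqvars ((Fun f ss, Var y) :: E'))).
    { intros E'; split; intros z; rewrite !in_eqvars_cons; simpl; tauto. }
    assert (Hnv : nvars ((Var y, Fun f ss) :: E) = nvars ((Fun f ss, Var y) :: E)).
    { apply Nat.le_antisymm; apply nvars_le, Hswap. }
    assert (Hsz : esize ((Var y, Fun f ss) :: E) = esize ((Fun f ss, Var y) :: E))
      by (unfold esize; simpl; lia).
    apply has_mgu_transfer with ((Var y, Fun f ss) :: E).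
    + intros sg; unfold unif; rewrite !Forall_cons_iff; simpl; split; intros [? ?]; auto.
    + apply has_mgu_var; rewrite Hnv; [|rewrite Hsz]; auto.
  - apply has_mgu_Fun; auto.
Qed.

Lemma mgu_exists (s t : T) :
  (exists th, app_subst th s = app_subst th t) -> exists sg, is_mgu sg s t.
Proof.
  intros (th&Hth). destruct (has_mgu_all [(s, t)]) as (sg&H1&H2).
  - exists th; constructor; auto.
  - exists sg. split.
    + inversion H1; auto.
    + intros tau Ht; apply H2; constructor; auto.
Qed.

End Unification.

Section ReductionOrder.
Context {F : Type}.
Notation T := (@term F).
Variables B gt : @rel F.
Hypothesis RO : reduction_order_compat B gt.

Lemma gt_irrefl (s : T) : ~ gt s s.
Proof. apply RO. Qed.
Lemma gt_trans (s t u : T) : gt s t -> gt t u -> gt s u.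
Proof. apply RO. Qed.
Lemma gt_app_subst (s t : T) sg : gt s t -> gt (app_subst sg s) (app_subst sg t).
Proof. apply RO. Qed.
Lemma gt_simB (s s' t' t : T) : simB B s s' -> gt s' t' -> simB B t' t -> gt s t.
Proof. apply RO. Qed.
Lemma gt_replace_at (u s t : T) p : subterm_at u p = Some s -> gt s t -> gt u (replace_at u p t).
Proof.
  intros Hp H. destruct RO as (_&_&_&Hc&_).
  rewrite <- (replace_at_subterm_at _ _ _ Hp) at 1. apply Hc; congruence.
Qed.

Lemma simB_refl (s : T) : simB B s s.
Proof. apply rt_refl. Qed.
Lemma simB_sym (s t : T) : simB B s t -> simB B t s.
Proof. apply conv_sym. Qed.
Lemma simB_trans (s t u : T) : simB B s t -> simB B t u -> simB B s u.
Proof. apply rt_trans. Qed.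
Lemma simB_sstep (s t : T) : sstep B s t -> simB B s t.
Proof. apply rt_step. Qed.

Lemma gt_simB_r (w z z' : T) : gt w z -> simB B z z' -> gt w z'.
Proof. intros; eapply gt_simB; eauto using simB_refl. Qed.
Lemma gt_simB_l (w v x : T) : simB B v w -> gt v x -> gt w x.
Proof. intros; eapply gt_simB; [apply simB_sym; eauto|eauto|apply simB_refl]. Qed.

Lemma gt_no_infinite_chain (g : nat -> T) : ~ (forall k, gt (g k) (g (S k))).
Proof.
  intros H. destruct RO as (_&_&Hwf&_).
  assert (Hacc : forall t, Acc (fun t s => gt s t) t -> forall k, g k <> t).
  { intros t Ha. induction Ha as [t _ IH]. intros k Hk. subst t.
    apply (IH (g (S k)) (H k) (S k)); auto. }
  apply (Hacc (g 0) (Hwf (g 0)) 0); auto.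
Qed.

(* Iterating [a > c[a sg]] would produce an infinite descending chain. *)
Lemma gt_not_embedded (a c : T) q sg :
  subterm_at c q <> None -> ~ gt a (replace_at c q (app_subst sg a)).
Proof.
  intros Hq H.
  set (h := fix h k := match k with 0 => a | S k => replace_at c q (app_subst sg (h k)) end).
  apply (gt_no_infinite_chain h). intros k. induction k as [|k IHk]; [exact H|].
  change (gt (replace_at c q (app_subst sg (h k))) (replace_at c q (app_subst sg (h (S k))))).
  rewrite <- (replace_at_replace_at c (app_subst sg (h k)) (app_subst sg (h (S k)))).
  apply gt_replace_at with (app_subst sg (h k)); [apply subterm_at_replace_at; auto|]. apply gt_app_subst; auto.
Qed.

Lemma gt_occurs (l r : T) x : gt l r -> occurs x r -> occurs x l.
Proof.
  intros H Hr. apply NNPP; intros Hl.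
  set (sg := fun y => if Nat.eq_dec y x then l else Var y).
  assert (Hls : app_subst sg l = l).
  { transitivity (app_subst (fun y => Var y) l); [|apply app_subst_Var]. apply app_subst_ext.
    intros y Hy; unfold sg; destruct Nat.eq_dec; subst; tauto. }
  destruct (occurs_subterm_at _ _ Hr) as (q&Hq).
  assert (Hq2 : subterm_at (app_subst sg r) q = Some l).
  { rewrite (subterm_at_app_subst _ _ _ sg Hq). simpl. unfold sg; destruct Nat.eq_dec; congruence. }
  apply (gt_not_embedded l (app_subst sg r) q (fun y => Var y)); [congruence|].
  rewrite app_subst_Var, (replace_at_subterm_at _ _ _ Hq2). rewrite <- Hls at 1. apply gt_app_subst; auto.
Qed.

Lemma gt_no_instance_in_rhs (l r : T) q sg : gt l r -> subterm_at r q <> Some (app_subst sg l).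
Proof.
  intros H Hq. apply (gt_not_embedded l r q sg); [congruence|].
  rewrite (replace_at_subterm_at _ _ _ Hq); auto.
Qed.

Section DecreasingRules.
Variable R : @rel F.
Hypothesis R_gt : forall l r, R l r -> gt l r.

Lemma rstep_gt (s t : T) : rstep R s t -> gt s t.
Proof.
  intros (l&r&p&sg&H1&H2&->). apply gt_replace_at with (app_subst sg l); auto. apply gt_app_subst; auto.
Qed.

Lemma rsteps_ge (s t : T) : rsteps R s t -> s = t \/ gt s t.
Proof.
  induction 1; auto using rstep_gt.
  destruct IHclos_refl_trans1 as [->|H1]; destruct IHclos_refl_trans2 as [->|H2]; auto.
  right; eapply gt_trans; eauto.
Qed.

Lemma gt_rsteps (w y b : T) : gt w y -> rsteps R y b -> gt w b.
Proof. intros H1 H2. destruct (rsteps_ge _ _ H2) as [<-|H]; auto. eapply gt_trans; eauto. Qed.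

Lemma rstep_mod_gt (s t : T) : rstep_mod R B s t -> gt s t.
Proof. intros (s'&t'&H1&H2&H3). apply gt_simB with s' t'; auto. apply rstep_gt; auto. Qed.

Lemma terminating_mod_of_gt : terminating_mod R B.
Proof. intros (f&Hf). apply (gt_no_infinite_chain f). intros k; apply rstep_mod_gt; auto. Qed.

Lemma normal_form_exists (t : T) : exists n, rsteps R t n /\ normal_form R n.
Proof.
  destruct RO as (_&_&Hwf&_). induction (Hwf t) as [t _ IH].
  destruct (classic (normal_form R t)) as [Hn|Hn].
  - exists t; split; auto. apply rt_refl.
  - apply NNPP in Hn. destruct Hn as (u&Hu).
    destruct (IH u (rstep_gt _ _ Hu)) as (n&H1&H2). exists n; split; auto.
    eapply rt_trans; [apply rt_step|]; eauto.
Qed.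

End DecreasingRules.

Lemma normal_form_rsteps (R : @rel F) (s t : T) : normal_form R s -> rsteps R s t -> s = t.
Proof.
  intros Hn H. induction H; auto.
  - exfalso; apply Hn; eauto.
  - specialize (IHclos_refl_trans1 Hn); subst. auto.
Qed.

Lemma first_step_to_nf (R : @rel F) (z m : T) : rsteps R z m -> normal_form R m -> ~ normal_form R z ->
  exists z1, rstep R z z1 /\ rsteps R z1 m.
Proof.
  intros Hm Nm Nz. apply clos_rt_rt1n in Hm. inversion Hm; subst; [contradiction|].
  exists y; split; auto. apply clos_rt1n_rt; auto.
Qed.

End ReductionOrder.

Section NewmanModulo.
Context {F : Type}.
Notation T := (@term F).
Variables B gt R : @rel F.
Hypothesis RO : reduction_order_compat B gt.
Hypothesis R_gt : forall l r, R l r -> gt l r.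
Notation J := (joinable_mod R B).
Let nf_exists := normal_form_exists B gt RO R R_gt.
Let gt_reduct := gt_rsteps B gt RO R R_gt.
Let rstep_R_gt := rstep_gt B gt RO R R_gt.

Lemma joinable_sym (x y : T) : J x y -> J y x.
Proof. intros (a&b&H1&H2&H3). exists b, a; auto using simB_sym. Qed.

Lemma joinable_refl (x : T) : J x x.
Proof. exists x, x; split; [apply rt_refl|split; [apply simB_refl|apply rt_refl]]. Qed.

Lemma joinable_of_simB (x y : T) : simB B x y -> J x y.
Proof. intros; exists x, y; split; [apply rt_refl|split; auto; apply rt_refl]. Qed.

Definition unique_nf_mod (u : T) := forall u1 u2 n1 n2, simB B u1 u -> simB B u2 u ->
  rsteps R u1 n1 -> rsteps R u2 n2 -> normal_form R n1 -> normal_form R n2 -> simB B n1 n2.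

Definition weakly_below (w z : T) := gt w z \/ simB B z w.

Definition local_peaks_joinable (w : T) := forall v, simB B v w ->
  (forall x y, rstep R v x -> rstep R v y -> J x y) /\
  (forall x y, rstep R v x -> sstep B v y -> J x y).

Lemma weakly_below_gt (w x y : T) : weakly_below w x -> gt x y -> gt w y.
Proof. intros [H|H] H2; [eapply (gt_trans B gt RO)|eapply (gt_simB_l B gt RO)]; eauto. Qed.

Section BelowW.
Variable w : T.
Hypothesis IH : forall u, gt w u -> unique_nf_mod u.

Lemma joinable_trans_below (x y z : T) : J x y -> J y z -> gt w y -> J x z.
Proof.
  intros (a&b&Ha&Hab&Hb) (c&d&Hc&Hcd&Hd) Hy.
  assert (gb : gt w b) by (apply gt_reduct with y; auto).
  assert (gc : gt w c) by (apply gt_reduct with y; auto).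
  assert (ga : gt w a) by (apply (gt_simB_r B gt RO) with b; auto using simB_sym).
  destruct (nf_exists a) as (na&Hna1&Hna2).
  destruct (nf_exists b) as (nb&Hnb1&Hnb2).
  destruct (nf_exists c) as (nc&Hnc1&Hnc2).
  destruct (nf_exists d) as (nd&Hnd1&Hnd2).
  assert (simB B na nb) by (apply (IH b gb a b); auto using simB_refl).
  assert (simB B nb nc) by (apply (IH y Hy y y); auto using simB_refl; eauto using rsteps_trans).
  assert (simB B nc nd) by (apply (IH c gc c d); auto using simB_refl, simB_sym).
  exists na, nd. split; [eapply rt_trans; eauto|]. split; [|eapply rt_trans; eauto].
  eauto using simB_trans.
Qed.

Hypothesis HL : local_peaks_joinable w.

(* Split off the first step towards each normal form: the resulting local peak is joinable,
   and everything after the first steps lies strictly below [w]. *)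
Lemma unique_nf_from_source (z n n' : T) : simB B z w -> rsteps R z n -> rsteps R z n' ->
  normal_form R n -> normal_form R n' -> simB B n n'.
Proof.
  intros Hz H1 H2 N1 N2.
  destruct (classic (normal_form R z)) as [Nz|Nz].
  { rewrite <- (normal_form_rsteps R _ _ Nz H1), <- (normal_form_rsteps R _ _ Nz H2). apply simB_refl. }
  destruct (first_step_to_nf R _ _ H1 N1 Nz) as (z1&Hz1&Hz1n).
  destruct (first_step_to_nf R _ _ H2 N2 Nz) as (z2&Hz2&Hz2n).
  destruct (proj1 (HL z Hz) z1 z2 Hz1 Hz2) as (a&b&Ha&Hab&Hb).
  assert (g1 : gt w z1) by (apply (gt_simB_l B gt RO) with z; [auto|apply rstep_R_gt; auto]).
  assert (g2 : gt w z2) by (apply (gt_simB_l B gt RO) with z; [auto|apply rstep_R_gt; auto]).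
  assert (ga : gt w a) by (apply gt_reduct with z1; auto).
  destruct (nf_exists a) as (na&Hna1&Hna2).
  destruct (nf_exists b) as (nb&Hnb1&Hnb2).
  assert (simB B n na)
    by (apply (IH z1 g1 z1 z1); auto using simB_refl; eauto using rsteps_trans).
  assert (simB B na nb) by (apply (IH a ga a b); auto using simB_refl, simB_sym).
  assert (simB B nb n')
    by (apply (IH z2 g2 z2 z2); auto using simB_refl; eauto using rsteps_trans).
  eauto using simB_trans.
Qed.

Lemma unique_nf_across_reducible_sstep (z z' n n' : T) : simB B z w -> sstep B z z' ->
  rsteps R z n -> rsteps R z' n' -> normal_form R n -> normal_form R n' -> ~ normal_form R z ->
  simB B n n'.
Proof.
  intros Hz Hzz' H1 H2 N1 N2 Nz. apply NNPP in Nz. destruct Nz as (z1&Hz1).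
  assert (Hz' : simB B z' w) by (eapply simB_trans; [apply simB_sym, simB_sstep|]; eauto).
  destruct (proj2 (HL z Hz) z1 z' Hz1 Hzz') as (a&b&Ha&Hab&Hb).
  assert (g1 : gt w z1) by (apply (gt_simB_l B gt RO) with z; [auto|apply rstep_R_gt; auto]).
  assert (ga : gt w a) by (apply gt_reduct with z1; auto).
  destruct (nf_exists a) as (na&Hna1&Hna2).
  destruct (nf_exists b) as (nb&Hnb1&Hnb2).
  destruct (nf_exists z1) as (n1&Hn11&Hn12).
  assert (simB B n n1)
    by (apply (unique_nf_from_source z); auto; eapply rt_trans; [apply rt_step|]; eauto).
  assert (simB B n1 na)
    by (apply (IH z1 g1 z1 z1); auto using simB_refl; eauto using rsteps_trans).
  assert (simB B na nb) by (apply (IH a ga a b); auto using simB_refl, simB_sym).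
  assert (simB B nb n')
    by (apply (unique_nf_from_source z'); auto; eauto using rsteps_trans).
  eauto using simB_trans.
Qed.

Lemma unique_nf_across_sstep (z z' n n' : T) : simB B z w -> sstep B z z' ->
  rsteps R z n -> rsteps R z' n' -> normal_form R n -> normal_form R n' -> simB B n n'.
Proof.
  intros Hz Hzz' H1 H2 N1 N2.
  destruct (classic (normal_form R z)) as [Nz|Nz];
    [|apply (unique_nf_across_reducible_sstep z z'); auto].
  destruct (classic (normal_form R z')) as [Nz'|Nz'].
  - rewrite <- (normal_form_rsteps R _ _ Nz H1), <- (normal_form_rsteps R _ _ Nz' H2).
    apply simB_sstep; auto.
  - apply simB_sym. apply (unique_nf_across_reducible_sstep z' z); auto using sstep_sym.
    eapply simB_trans; [apply simB_sym, simB_sstep|]; eauto.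
Qed.

Lemma unique_nf_of_local_peaks : unique_nf_mod w.
Proof.
  intros u1 u2 n1 n2 H1 H2 Hr1 Hr2 N1 N2.
  assert (Hc : simB B u1 u2) by eauto using simB_trans, simB_sym.
  clear H2. revert n1 n2 Hr1 Hr2 N1 N2. apply clos_rt_rt1n in Hc.
  induction Hc as [u1|x y u2 Hxy Hc IHc]; intros n1 n2 Hr1 Hr2 N1 N2.
  - eapply unique_nf_from_source; eauto.
  - assert (Hy : simB B y w) by (eapply simB_trans; [apply simB_sym, simB_sstep|]; eauto).
    destruct (nf_exists y) as (ny&Hny1&Hny2).
    apply simB_trans with ny; [apply (unique_nf_across_sstep x y n1 ny); auto|]. apply IHc; auto.
Qed.

End BelowW.

Lemma church_rosser_of_unique_nf : (forall u, unique_nf_mod u) -> church_rosser_mod R B.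
Proof.
  intros HP.
  assert (Hstep : forall s t ns nt, sstep (union R B) s t -> rsteps R s ns -> rsteps R t nt ->
            normal_form R ns -> normal_form R nt -> simB B ns nt).
  { assert (H1 : forall s t ns nt, rstep (union R B) s t -> rsteps R s ns -> rsteps R t nt ->
                normal_form R ns -> normal_form R nt -> simB B ns nt).
    { intros s t ns nt H Hs Ht Ns Nt. apply rstep_union in H as [H|H].
      - apply (HP s s s); auto using simB_refl. eapply rt_trans; [apply rt_step|]; eauto.
      - apply (HP s s t); auto using simB_refl. apply simB_sym, simB_sstep; left; auto. }
    intros s t ns nt [H|H] Hs Ht Ns Nt; [eauto|apply simB_sym; eauto]. }
  assert (Hconv : forall s t, conv (union R B) s t -> forall ns nt, rsteps R s ns ->
            rsteps R t nt -> normal_form R ns -> normal_form R nt -> simB B ns nt).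
  { intros s t H. induction H as [s t H|s|s t u H1 IH1 H2 IH2]; intros ns nt Hs Ht Ns Nt; eauto.
    - apply (HP s s s); auto using simB_refl.
    - destruct (nf_exists t) as (n&Hn1&Hn2). eauto using simB_trans. }
  intros s t H.
  destruct (nf_exists s) as (ns&H1&H2).
  destruct (nf_exists t) as (nt&H3&H4).
  exists ns, nt; split; [auto|split; [apply (Hconv s t H); auto|auto]].
Qed.

Theorem church_rosser_of_local_peaks :
  (forall w, (forall u, gt w u -> unique_nf_mod u) -> local_peaks_joinable w) ->
  church_rosser_mod R B.
Proof.
  intros HL. apply church_rosser_of_unique_nf. intros u. pose proof RO as (_&_&Hwf&_).
  induction (Hwf u) as [w _ IHw]. apply (unique_nf_of_local_peaks w); auto.
Qed.

End NewmanModulo.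

Section CriticalPairs.
Context {F : Type}.
Notation T := (@term F).
Variables B gt R : @rel F.
Hypothesis RO : reduction_order_compat B gt.
Hypothesis R_gt : forall l r, R l r -> gt l r.
Hypothesis R_left_linear : left_linear R.
Hypothesis B_vars : var_preserving B.
Notation J := (joinable_mod R B).
Notation below := (weakly_below B gt).

Lemma joinable_replace_at (s t v : T) p dl : subterm_at v p <> None -> J s t ->
  J (replace_at v p (app_subst dl s)) (replace_at v p (app_subst dl t)).
Proof.
  intros Hv (a&b&Ha&Hab&Hb).
  exists (replace_at v p (app_subst dl a)), (replace_at v p (app_subst dl b)).
  split; [|split]; apply closed_replace_at_instance; auto using rsteps_closed_under_contexts,
    rsteps_closed_under_substs, conv_closed_under_contexts, conv_closed_under_substs.
Qed.

Definition cp_instances_joinable_below (w : T) := forall s t,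
  union (PCP R) (PCP_pm R B) s t -> forall v p dl, subterm_at v p <> None ->
  below w (replace_at v p (app_subst dl s)) -> below w (replace_at v p (app_subst dl t)) ->
  J (replace_at v p (app_subst dl s)) (replace_at v p (app_subst dl t)).

(* The outer and inner rule of a peak; peaks between two [B]-steps never need joining. *)
Definition peak_rules (So Si : @rel F) :=
  (So = R /\ Si = R) \/ (So = R /\ Si = pm B) \/ (So = pm B /\ Si = R).

Lemma below_reduct (w v : T) (S : @rel F) l r p s : simB B v w -> (S = R \/ S = pm B) -> S l r ->
  subterm_at v p = Some (app_subst s l) -> below w (replace_at v p (app_subst s r)).
Proof.
  intros Hv HS Hlr Hp. assert (Hst : rstep S v (replace_at v p (app_subst s r))) by (apply rstep_at with l; auto).
  destruct HS as [->| ->].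
  - left. apply (gt_simB_l B gt RO w v); auto. apply (rstep_gt B gt RO R R_gt); auto.
  - right. eapply simB_trans; [|exact Hv]. apply simB_sym, simB_sstep, rstep_pm; auto.
Qed.

Lemma rule_vars (S : @rel F) l r : (S = R \/ S = pm B) -> S l r -> forall x, occurs x r -> occurs x l.
Proof.
  intros [->| ->] H x Hx.
  - apply (gt_occurs B gt RO l r x); auto.
  - destruct H as [H|H]; apply (B_vars _ _ H); auto.
Qed.

Lemma variable_overlap_joinable_R (v : T) (So : @rel F) lo ro po so so' q1 x :
  So lo ro -> (So = R \/ So = pm B) ->
  subterm_at v po = Some (app_subst so lo) -> subterm_at lo q1 = Some (Var x) ->
  (forall y, rsteps R (so y) (so' y)) ->
  J (replace_at v po (replace_at (app_subst so lo) q1 (so' x))) (replace_at v po (app_subst so ro)).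
Proof.
  intros Hlo HSo Hpo Hq1 Hpt.
  assert (Hv : subterm_at v po <> None) by congruence.
  assert (Hl : rsteps R (replace_at v po (replace_at (app_subst so lo) q1 (so' x)))
                        (replace_at v po (app_subst so' lo))).
  { apply closed_under_contexts_replace_at; auto; [apply rsteps_closed_under_contexts|].
    apply rt_replace_var_pointwise; auto. apply rstep_closed_under_contexts. }
  assert (Hr : rsteps R (replace_at v po (app_subst so ro)) (replace_at v po (app_subst so' ro))).
  { apply closed_under_contexts_replace_at; auto; [apply rsteps_closed_under_contexts|].
    apply rt_app_subst_pointwise; auto. apply rstep_closed_under_contexts. }
  destruct HSo as [-> | ->].
  - exists (replace_at v po (app_subst so' ro)), (replace_at v po (app_subst so' ro)).
    split; [|split]; auto using simB_refl.
    apply rsteps_trans with (replace_at v po (app_subst so' lo)); auto.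
    apply rt_step, rstep_replace_at; auto.
  - exists (replace_at v po (app_subst so' lo)), (replace_at v po (app_subst so' ro)).
    split; [|split]; auto. apply simB_sstep, rstep_pm, rstep_replace_at; auto.
Qed.

(* Left-linearity makes [q1] the only occurrence of [x] in [lo], so the inner [B]-step is a
   [B]-step of the substitution. *)
Lemma variable_overlap_joinable_B (v : T) lo ro po so so' q1 x :
  R lo ro -> subterm_at v po = Some (app_subst so lo) -> subterm_at lo q1 = Some (Var x) ->
  sstep B (so x) (so' x) -> (forall y, y <> x -> so' y = so y) ->
  J (replace_at v po (replace_at (app_subst so lo) q1 (so' x))) (replace_at v po (app_subst so ro)).
Proof.
  intros Hlo Hpo Hq1 Hsx Hso'y.
  assert (Hv : subterm_at v po <> None) by congruence.
  assert (Hrep : replace_at (app_subst so lo) q1 (so' x) = app_subst so' lo).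
  { rewrite (replace_at_unique_var lo q1 x so (so' x) Hq1).
    - apply app_subst_ext. intros y _. unfold upd. destruct Nat.eq_dec; subst; auto.
      rewrite Hso'y; auto.
    - intros q' Hq'. apply (R_left_linear lo ro Hlo x); auto. }
  rewrite Hrep.
  exists (replace_at v po (app_subst so' ro)), (replace_at v po (app_subst so ro)).
  split; [|split]; [apply rt_step, rstep_replace_at; auto| |apply rt_refl].
  apply simB_sym. apply closed_under_contexts_replace_at; auto; [apply conv_closed_under_contexts|].
  apply rt_app_subst_pointwise; [apply sstep_closed_under_contexts|].
  intros y. destruct (Nat.eq_dec y x) as [->|Hne]; [apply rt_step; auto|].
  rewrite Hso'y; auto; apply rt_refl.
Qed.

Lemma variable_overlap_joinable (v : T) (So Si : @rel F) lo ro po so li ri q1 q2 si x :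
  So lo ro -> Si li ri -> peak_rules So Si ->
  subterm_at v po = Some (app_subst so lo) -> subterm_at lo q1 = Some (Var x) ->
  subterm_at (so x) q2 = Some (app_subst si li) ->
  J (replace_at v (po ++ q1 ++ q2) (app_subst si ri)) (replace_at v po (app_subst so ro)).
Proof.
  intros Hlo Hli HSS Hpo Hq1 Hq2.
  set (so' := upd so x (replace_at (so x) q2 (app_subst si ri))).
  assert (Hso'x : so' x = replace_at (so x) q2 (app_subst si ri)).
  { unfold so', upd. destruct Nat.eq_dec; congruence. }
  assert (Hso'y : forall y, y <> x -> so' y = so y).
  { intros y Hy; unfold so', upd. destruct Nat.eq_dec; congruence. }
  assert (Hsx : rstep Si (so x) (so' x)) by (rewrite Hso'x; apply rstep_at with li; auto).
  assert (Hpt : Si = R -> forall y, rsteps R (so y) (so' y)).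
  { intros -> y. destruct (Nat.eq_dec y x) as [->|Hne]; [apply rt_step; auto|].
    rewrite Hso'y; auto; apply rt_refl. }
  assert (Hq1s : subterm_at (app_subst so lo) q1 = Some (so x))
    by apply (subterm_at_app_subst lo (Var x) q1 so Hq1).
  rewrite (replace_at_app v (app_subst so lo) _ po (q1 ++ q2) Hpo),
    (replace_at_app _ (so x) _ q1 q2 Hq1s), <- Hso'x.
  destruct HSS as [[-> ->]|[[-> ->]|[-> ->]]].
  - apply (variable_overlap_joinable_R v R); auto.
  - apply variable_overlap_joinable_B; auto. apply rstep_pm; auto.
  - apply (variable_overlap_joinable_R v (pm B)); auto.
Qed.

(* Exchanges the variables below [N0] with those in [N0, 2 N0): renames a rule apart. *)
Definition swapv (N0 : nat) (x : var) : var :=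
  if x <? N0 then x + N0 else if x <? N0 + N0 then x - N0 else x.

Lemma swapv_involutive N0 x : swapv N0 (swapv N0 x) = x.
Proof.
  unfold swapv. destruct (Nat.ltb_spec x N0).
  - destruct (Nat.ltb_spec (x + N0) N0); [lia|]. destruct (Nat.ltb_spec (x + N0) (N0 + N0)); lia.
  - destruct (Nat.ltb_spec x (N0 + N0)).
    + destruct (Nat.ltb_spec (x - N0) N0); lia.
    + destruct (Nat.ltb_spec x N0); [lia|]. destruct (Nat.ltb_spec x (N0 + N0)); lia.
Qed.

Lemma swapv_lt N0 x : x < N0 -> swapv N0 x = x + N0.
Proof. unfold swapv; destruct (Nat.ltb_spec x N0); lia. Qed.

Lemma vars_bounded (ts : list T) : exists N0, forall x t, In t ts -> occurs x t -> x < N0.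
Proof.
  exists (S (list_max (concat (map vars ts)))). intros x t Ht Hx.
  assert (x <= list_max (concat (map vars ts))); [|lia].
  assert (Hf := proj1 (list_max_le (concat (map vars ts)) _) (le_n _)).
  rewrite Forall_forall in Hf. apply Hf. apply in_concat. exists (vars t).
  split; [apply in_map; auto|apply in_vars; auto].
Qed.

Lemma rename_apart (li ri lo ro : T) (si so : subst) :
  exists (rho : var -> var) th, (forall x, rho (rho x) = x) /\
    app_subst th (app_subst (fun x => Var (rho x)) li) = app_subst si li /\
    app_subst th (app_subst (fun x => Var (rho x)) ri) = app_subst si ri /\
    (forall x, occurs x lo \/ occurs x ro -> th x = so x) /\
    (forall x, occurs x (app_subst (fun x => Var (rho x)) li) \/
               occurs x (app_subst (fun x => Var (rho x)) ri) -> ~ (occurs x lo \/ occurs x ro)).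
Proof.
  destruct (vars_bounded [li; ri; lo; ro]) as (N0&HN0).
  assert (Hi : forall x, occurs x li \/ occurs x ri -> x < N0)
    by (intros x [Hx|Hx]; [apply (HN0 x li)|apply (HN0 x ri)]; simpl; auto).
  assert (Ho : forall x, occurs x lo \/ occurs x ro -> x < N0)
    by (intros x [Hx|Hx]; [apply (HN0 x lo)|apply (HN0 x ro)]; simpl; auto).
  set (th := fun y => if y <? N0 then so y else si (swapv N0 y)).
  assert (Hren : forall t, (forall x, occurs x t -> x < N0) ->
            app_subst th (app_subst (fun x => Var (swapv N0 x)) t) = app_subst si t).
  { intros t Ht. rewrite app_subst_comp. apply app_subst_ext. intros y Hy. simpl.
    unfold th. rewrite swapv_lt by auto. destruct (Nat.ltb_spec (y + N0) N0); [lia|].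
    rewrite <- (swapv_lt N0 y), swapv_involutive by auto. auto. }
  exists (swapv N0), th. split; [apply swapv_involutive|]. split; [|split; [|split]].
  - apply Hren; auto.
  - apply Hren; auto.
  - intros x Hx. unfold th. destruct (Nat.ltb_spec x N0); auto. specialize (Ho x Hx); lia.
  - intros x Hx Hx2. apply Ho in Hx2.
    destruct Hx as [Hx|Hx]; apply occurs_app_subst in Hx as (y&Hy&Hxy); inversion Hxy; subst;
      rewrite swapv_lt in Hx2; auto; lia.
Qed.

Lemma app_subst_variant (l1 r1 lo ro : T) (pi : var -> var) th so :
  l1 = app_subst (fun x => Var (pi x)) lo -> r1 = app_subst (fun x => Var (pi x)) ro ->
  (forall x, occurs x ro -> occurs x lo) ->
  app_subst th l1 = app_subst so lo -> app_subst th r1 = app_subst so ro.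
Proof.
  intros -> -> Hvars Hl. rewrite app_subst_comp. apply app_subst_ext. intros y Hy.
  apply (app_subst_agree lo (fun x => app_subst th (Var (pi x))) so y); auto.
  rewrite <- app_subst_comp; auto.
Qed.

Lemma proper_subterms_normal_of_instance (t : T) dl :
  (forall q z, q <> [] -> subterm_at (app_subst dl t) q = Some z -> normal_form R z) ->
  forall q z, q <> [] -> subterm_at t q = Some z -> normal_form R z.
Proof.
  intros H q z Hq Hz (z'&Hz'). apply (H q (app_subst dl z)); auto.
  - apply subterm_at_app_subst; auto.
  - exists (app_subst dl z'). apply rstep_closed_under_substs; auto.
Qed.

(* The core of the critical pair lemma: after renaming the inner rule apart, a peak with a prime
   overlap at a non-variable position is an instance of a prime critical pair, unless it is the
   trivial overlap of a rule with itself at the root. *)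
Lemma prime_overlap_cp_instance (So Si : @rel F) lo ro so li ri q si u :
  So lo ro -> Si li ri -> peak_rules So Si ->
  subterm_at lo q = Some u -> (forall x, u <> Var x) -> app_subst si li = app_subst so u ->
  (forall q' z, q' <> [] -> subterm_at (app_subst si li) q' = Some z -> normal_form R z) ->
  replace_at (app_subst so lo) q (app_subst si ri) = app_subst so ro \/
  exists s t dl, union (PCP R) (PCP_pm R B) s t /\
    app_subst dl s = replace_at (app_subst so lo) q (app_subst si ri) /\
    app_subst dl t = app_subst so ro.
Proof.
  intros Hlo Hli HSS Hu Hnv Heq Hprime.
  destruct (rename_apart li ri lo ro si so) as (rho&th&Hrho&Hth1&Hth2&Hagree&Hdisj).
  set (l1 := app_subst (fun x => Var (rho x)) li) in *.
  set (r1 := app_subst (fun x => Var (rho x)) ri) in *.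
  assert (Hsame : forall t, (forall x, occurs x t -> occurs x lo \/ occurs x ro) ->
                    app_subst th t = app_subst so t)
    by (intros t Ht; apply app_subst_ext; auto).
  assert (Hthu : app_subst th u = app_subst so u)
    by (apply Hsame; intros x Hx; left; eapply subterm_at_occurs; eauto).
  assert (Hunif : app_subst th l1 = app_subst th u) by congruence.
  destruct (mgu_exists l1 u (ex_intro _ th Hunif)) as (sg&Hsg1&Hsg2).
  destruct (Hsg2 th Hunif) as (dl&Hdl).
  assert (Hdlt : forall t, app_subst th t = app_subst dl (app_subst sg t)).
  { intros t. rewrite app_subst_comp. apply app_subst_ext. intros y _. apply Hdl. }
  destruct (classic (q = [] /\ variant l1 r1 lo ro)) as [[-> (pi&_&_&Hl1&Hr1)]|Hnvar].
  { left. simpl in Hu. injection Hu as <-. rewrite replace_at_nil, <- Hth2.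
    apply (app_subst_variant l1 r1 lo ro pi); auto; [|congruence].
    apply (rule_vars So); auto; destruct HSS as [[-> _]|[[-> _]|[-> _]]]; auto. }
  right. exists (replace_at (app_subst sg lo) q (app_subst sg r1)), (app_subst sg ro), dl.
  split; [|split].
  - assert (Hpcp : pcp_of R Si So (replace_at (app_subst sg lo) q (app_subst sg r1)) (app_subst sg ro)).
    { exists l1, r1, q, lo, ro, sg, u. split; [|split; [exact Hu|split; [exact (conj Hsg1 Hsg2)|]]].
      - split; [exists li, ri; split; auto; exists rho, rho; auto|].
        split; [exists lo, ro; split; auto; exists (fun x => x), (fun x => x);
                split; [auto|split; symmetry; apply app_subst_Var]|].
        split; [exact Hdisj|]. split; [exists u; split; auto; split; auto; exists th; auto|].
        intros Hq0 Hv'. apply Hnvar; auto.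
      - split; [|split; reflexivity].
        apply (proper_subterms_normal_of_instance _ dl). rewrite <- Hdlt, Hthu, <- Heq; auto. }
    destruct HSS as [[-> ->]|[[-> ->]|[-> ->]]]; [left|right; right|right; left]; exact Hpcp.
  - rewrite app_subst_replace_at, <- !Hdlt, Hsame, Hth2; auto.
    rewrite (subterm_at_app_subst lo u q sg Hu); congruence.
  - rewrite <- Hdlt, Hsame; auto.
Qed.

Section BelowW.
Variable w : T.
Hypothesis IH : forall u, gt w u -> unique_nf_mod B R u.
Hypothesis CP : cp_instances_joinable_below w.

Definition peaks_joinable_upto (N : nat) := forall (v : T), simB B v w ->
  forall l1 r1 p1 s1 (S2 : @rel F) l2 r2 p2 s2, R l1 r1 -> (S2 = R \/ S2 = pm B) -> S2 l2 r2 ->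
  subterm_at v p1 = Some (app_subst s1 l1) -> subterm_at v p2 = Some (app_subst s2 l2) ->
  min (size (app_subst s1 l1)) (size (app_subst s2 l2)) < N ->
  J (replace_at v p1 (app_subst s1 r1)) (replace_at v p2 (app_subst s2 r2)).

Lemma prime_overlap_joinable (v : T) (So Si : @rel F) lo ro po so li ri q si u :
  simB B v w -> So lo ro -> Si li ri -> peak_rules So Si ->
  subterm_at v po = Some (app_subst so lo) -> subterm_at lo q = Some u -> (forall x, u <> Var x) ->
  app_subst si li = app_subst so u ->
  (forall q' z, q' <> [] -> subterm_at (app_subst si li) q' = Some z -> normal_form R z) ->
  J (replace_at v (po ++ q) (app_subst si ri)) (replace_at v po (app_subst so ro)).
Proof.
  intros Hv Hlo Hli HSS Hpo Hu Hnv Heq Hprime.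
  assert (HSo : So = R \/ So = pm B) by (destruct HSS as [[-> _]|[[-> _]|[-> _]]]; auto).
  assert (HSi : Si = R \/ Si = pm B) by (destruct HSS as [[_ ->]|[[_ ->]|[_ ->]]]; auto).
  assert (Hq : subterm_at (app_subst so lo) q = Some (app_subst si li))
    by (rewrite Heq; apply subterm_at_app_subst; auto).
  rewrite (replace_at_app v (app_subst so lo)) by auto.
  destruct (prime_overlap_cp_instance So Si lo ro so li ri q si u)
    as [Htriv|(s&t&dl&HU&Hs&Ht)]; auto.
  - rewrite Htriv. apply joinable_refl.
  - assert (Hv0 : subterm_at v po <> None) by congruence.
    rewrite <- Hs, <- Ht. apply CP; auto; rewrite ?Hs, ?Ht, <- ?(replace_at_app v (app_subst so lo)) by auto.
    + apply (below_reduct w v Si li ri); auto. rewrite (subterm_at_app_Some v _ po q Hpo); auto.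
    + apply (below_reduct w v So lo ro); auto.
Qed.

(* If the inner redex has a reducible proper subterm, both sides are joinable, by induction on size,
   with the term obtained by contracting that smaller redex, which lies strictly below [w]. *)
Lemma nonprime_overlap_joinable (N : nat) (IHN : peaks_joinable_upto N) (v : T) (So Si : @rel F)
    lo ro po so li ri q si q' z :
  simB B v w -> So lo ro -> Si li ri -> peak_rules So Si ->
  subterm_at v po = Some (app_subst so lo) -> subterm_at v (po ++ q) = Some (app_subst si li) ->
  size (app_subst si li) < S N ->
  q' <> [] -> subterm_at (app_subst si li) q' = Some z -> ~ normal_form R z ->
  J (replace_at v (po ++ q) (app_subst si ri)) (replace_at v po (app_subst so ro)).
Proof.
  intros Hv Hlo Hli HSS Hpo Hpi Hsz Hq' Hz Hnz.
  assert (HSo : So = R \/ So = pm B) by (destruct HSS as [[-> _]|[[-> _]|[-> _]]]; auto).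
  assert (HSi : Si = R \/ Si = pm B) by (destruct HSS as [[_ ->]|[[_ ->]|[_ ->]]]; auto).
  apply NNPP in Hnz. destruct Hnz as (z'&(l3&r3&q3&s3&H3&Hq3&_)).
  set (pn := (po ++ q) ++ (q' ++ q3)).
  assert (Hpn : subterm_at v pn = Some (app_subst s3 l3)).
  { unfold pn. rewrite (subterm_at_app_Some v _ (po ++ q) _ Hpi).
    rewrite (subterm_at_app_Some _ _ q' q3 Hz). auto. }
  assert (Hsz3 : size (app_subst s3 l3) < N).
  { destruct (size_subterm_at _ _ _ Hq3) as [H1 _]. destruct (size_subterm_at _ _ _ Hz) as [_ H2].
    specialize (H2 Hq'). lia. }
  set (m := replace_at v pn (app_subst s3 r3)).
  assert (J1 : J m (replace_at v po (app_subst so ro)))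
    by (apply (IHN v Hv l3 r3 pn s3 So lo ro po so); auto; lia).
  assert (J2 : J m (replace_at v (po ++ q) (app_subst si ri)))
    by (apply (IHN v Hv l3 r3 pn s3 Si li ri (po ++ q) si); auto; lia).
  assert (gm : gt w m).
  { apply (gt_simB_l B gt RO w v); auto. apply (rstep_gt B gt RO R R_gt). apply rstep_at with l3; auto. }
  apply (joinable_trans_below B gt R RO R_gt w IH) with m; auto. apply joinable_sym; auto.
Qed.

Lemma nested_peak_joinable (N : nat) (IHN : peaks_joinable_upto N) (v : T) (So Si : @rel F)
    lo ro po so li ri q si :
  simB B v w -> So lo ro -> Si li ri -> peak_rules So Si ->
  subterm_at v po = Some (app_subst so lo) -> subterm_at (app_subst so lo) q = Some (app_subst si li) ->
  size (app_subst si li) < S N ->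
  J (replace_at v (po ++ q) (app_subst si ri)) (replace_at v po (app_subst so ro)).
Proof.
  intros Hv Hlo Hli HSS Hpo Hq Hsz.
  destruct (subterm_at_app_subst_inv lo (app_subst si li) q so Hq)
    as [(u&Hu&Hnv&Heq)|(q1&q2&x&->&Hq1&Hq2)].
  2:{ apply (variable_overlap_joinable v So Si lo ro po so li ri q1 q2 si x); auto. }
  destruct (classic (exists q' z, q' <> [] /\ subterm_at (app_subst si li) q' = Some z /\
                                  ~ normal_form R z)) as [(q'&z&Hq'&Hz&Hnz)|Hnone].
  - apply (nonprime_overlap_joinable N IHN v So Si lo ro po so li ri q si q' z); auto.
    rewrite (subterm_at_app_Some v _ po q Hpo); auto.
  - apply (prime_overlap_joinable v So Si lo ro po so li ri q si u); auto.
    intros q' z Hq' Hz. apply NNPP. intros Hnz. apply Hnone; eauto.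
Qed.

Lemma peaks_joinable (N : nat) : peaks_joinable_upto N.
Proof.
  induction N as [|N IHN]; intros v Hv l1 r1 p1 s1 S2 l2 r2 p2 s2 H1 HS2 H2 Hp1 Hp2 Hmin; [lia|].
  destruct (pos_trichotomy p1 p2) as [(q&->)|[(q&->)|Hpar]].
  - assert (Hq : subterm_at (app_subst s1 l1) q = Some (app_subst s2 l2))
      by (rewrite <- (subterm_at_app_Some v _ p1 q Hp1); auto).
    destruct (size_subterm_at _ _ _ Hq) as [Hle _].
    apply joinable_sym. apply (nested_peak_joinable N IHN v R S2 l1 r1 p1 s1 l2 r2 q s2); auto.
    + destruct HS2 as [-> | ->]; unfold peak_rules; auto.
    + lia.
  - assert (Hq : subterm_at (app_subst s2 l2) q = Some (app_subst s1 l1))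
      by (rewrite <- (subterm_at_app_Some v _ p2 q Hp2); auto).
    destruct (size_subterm_at _ _ _ Hq) as [Hle _].
    apply (nested_peak_joinable N IHN v S2 R l2 r2 p2 s2 l1 r1 q s1); auto.
    + destruct HS2 as [-> | ->]; unfold peak_rules; auto.
    + lia.
  - set (z := replace_at (replace_at v p1 (app_subst s1 r1)) p2 (app_subst s2 r2)).
    assert (Hz : z = replace_at (replace_at v p2 (app_subst s2 r2)) p1 (app_subst s1 r1))
      by (apply replace_at_parallel_comm; auto).
    assert (H1z : rstep S2 (replace_at v p1 (app_subst s1 r1)) z).
    { apply rstep_at with l2; auto. rewrite subterm_at_replace_parallel; auto. }
    assert (H2z : rstep R (replace_at v p2 (app_subst s2 r2)) z).
    { rewrite Hz. apply rstep_at with l1; auto.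
      rewrite subterm_at_replace_parallel; auto. apply parallel_sym; auto. }
    destruct HS2 as [-> | ->].
    + exists z, z. split; [apply rt_step; auto|split; [apply simB_refl|apply rt_step; auto]].
    + exists (replace_at v p1 (app_subst s1 r1)), z.
      split; [apply rt_refl|split; [apply simB_sstep, rstep_pm; auto|apply rt_step; auto]].
Qed.

Lemma local_peaks_joinable_of_cp : local_peaks_joinable B R w.
Proof.
  intros v Hv. split.
  - intros x y (l1&r1&p1&s1&H1&Hp1&->) (l2&r2&p2&s2&H2&Hp2&->).
    apply (peaks_joinable (S (size (app_subst s1 l1))) v Hv l1 r1 p1 s1 R l2 r2 p2 s2); auto; lia.
  - intros x y (l1&r1&p1&s1&H1&Hp1&->) Hy. apply rstep_pm in Hy.
    destruct Hy as (l2&r2&p2&s2&H2&Hp2&->).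
    apply (peaks_joinable (S (size (app_subst s1 l1))) v Hv l1 r1 p1 s1 (pm B) l2 r2 p2 s2); auto; lia.
Qed.

End BelowW.

Theorem church_rosser_of_critical_pairs :
  (forall w, (forall u, gt w u -> unique_nf_mod B R u) -> cp_instances_joinable_below w) ->
  church_rosser_mod R B.
Proof.
  intros Hcp. apply (church_rosser_of_local_peaks B gt R RO R_gt).
  intros w IHw. apply local_peaks_joinable_of_cp; auto.
Qed.

End CriticalPairs.

Section RunInvariant.
Context {F : Type}.
Notation T := (@term F).
Variables B gt Rn : @rel F.
Hypothesis RO : reduction_order_compat B gt.
Hypothesis Rn_gt : forall l r, Rn l r -> gt l r.
Variable w : T.
Hypothesis IH : forall u, gt w u -> unique_nf_mod B Rn u.
Notation J := (joinable_mod Rn B).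
Notation below := (weakly_below B gt w).

Definition steps_joinable_below (E R : @rel F) :=
  forall x y, rstep (union E R) x y -> below x -> below y -> J x y.

Lemma steps_joinable_below_sstep E R (x y : T) : steps_joinable_below E R ->
  sstep (union E R) x y -> below x -> below y -> J x y.
Proof. intros H [Hs|Hs] Hx Hy; [auto|apply joinable_sym; auto]. Qed.

Lemma steps_joinable_below_subrel E R (S : @rel F) (x y : T) : steps_joinable_below E R ->
  (forall a b, S a b -> union E R a b) -> rstep S x y -> below x -> below y -> J x y.
Proof. intros H HS Hxy; apply H. eapply rstep_mono; eauto. Qed.

Lemma steps_joinable_below_pm E R E' R' : (forall a b, union E R a b -> pm (union E' R') a b) ->
  steps_joinable_below E' R' -> steps_joinable_below E R.
Proof.
  intros Hs HI x y Hxy Hx Hy. apply (steps_joinable_below_sstep E' R'); auto.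
  apply rstep_pm. eapply rstep_mono; eauto.
Qed.

Lemma joinable_via_reduct_below (x m y : T) (R : @rel F) : (forall l r, R l r -> gt l r) ->
  below x -> rstep R x m -> J x m -> J m y -> J x y.
Proof.
  intros HR Hx Hxm J1 J2. apply (joinable_trans_below B gt Rn RO Rn_gt w IH) with m; auto.
  apply (weakly_below_gt B gt RO w x); auto. apply (rstep_gt B gt RO R HR); auto.
Qed.

Section Step.
Variables E0 R0 E1 R1 : @rel F.
Hypothesis R0_gt : forall l r, R0 l r -> gt l r.
Hypothesis R1_gt : forall l r, R1 l r -> gt l r.
Hypothesis HI : steps_joinable_below E1 R1.

Lemma below_rstep (S : @rel F) (x m : T) :
  (forall l r, S l r -> gt l r) -> below x -> rstep S x m -> below m.
Proof. intros HS Hx Hm. left. apply (weakly_below_gt B gt RO w x); auto. apply (rstep_gt B gt RO S HS); auto. Qed.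

Lemma delete_reflects_invariant : delete_step B E0 R0 E1 R1 -> steps_joinable_below E0 R0.
Proof.
  intros (s&t&Hst&[HE _]&HR) x y (l&r&p&sg&[Hlr|Hlr]&Hp&->) Hx Hy.
  - apply HE in Hlr as [Hlr|[-> ->]].
    + apply (steps_joinable_below_subrel E1 R1 E1); auto; [intros; left; auto|].
      apply rstep_at with l; auto.
    + apply joinable_of_simB. rewrite <- (replace_at_subterm_at _ _ _ Hp) at 1.
      apply closed_replace_at_instance;
        auto using conv_closed_under_contexts, conv_closed_under_substs; congruence.
  - apply (steps_joinable_below_subrel E1 R1 R1); auto; [intros; right; auto|].
    apply rstep_at with l; auto. apply HR; auto.
Qed.

(* A step with the simplified equation [s = t] splits at the [R0]-reduct [u] of [s]. *)
Lemma simplify_reflects_invariant : simplify_step E0 R0 E1 R1 -> steps_joinable_below E0 R0.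
Proof.
  intros (E'&s&t&u&HE&Hsu&HE1&HR).
  assert (HR0 : forall a b, R0 a b -> union E1 R1 a b) by (intros; right; apply HR; auto).
  assert (HE1ut : forall a b, (a = u /\ b = t) -> union E1 R1 a b)
    by (intros a b [-> ->]; left; apply HE1; right; auto).
  assert (HEE : forall a b, E0 a b -> E1 a b \/ (a = s /\ b = t) \/ (a = t /\ b = s)).
  { intros a b H. destruct HE as [[HE _]|[HE _]]; apply HE in H as [H|[-> ->]]; auto;
      left; apply HE1; left; auto. }
  intros x y (l&r&p&sg&[Hlr|Hlr]&Hp&->) Hx Hy.
  - apply HEE in Hlr as [Hlr|[[-> ->]|[-> ->]]].
    + apply (steps_joinable_below_subrel E1 R1 E1); auto; [intros; left; auto|].
      apply rstep_at with l; auto.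
    + set (x' := replace_at x p (app_subst sg u)).
      assert (Hxx' : rstep R0 x x') by (eapply rstep_instance; eauto).
      apply (joinable_via_reduct_below x x' _ R0); auto.
      * apply (steps_joinable_below_subrel E1 R1 R0); auto. apply (below_rstep R0 x); auto.
      * apply (steps_joinable_below_subrel E1 R1 (fun a b => a = u /\ b = t)); auto;
          [|apply (below_rstep R0 x); auto].
        unfold x'. rewrite <- (replace_at_replace_at x (app_subst sg u) (app_subst sg t) p).
        apply rstep_at with u; auto. apply subterm_at_replace_at; congruence.
    + set (y' := replace_at x p (app_subst sg u)).
      assert (Hyy' : rstep R0 (replace_at x p (app_subst sg s)) y').
      { unfold y'. rewrite <- (replace_at_replace_at x (app_subst sg s) (app_subst sg u) p).
        eapply rstep_instance; eauto. apply subterm_at_replace_at; congruence. }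
      apply joinable_sym. apply (joinable_via_reduct_below _ y' _ R0); auto.
      * apply (steps_joinable_below_subrel E1 R1 R0); auto. apply (below_rstep R0 (replace_at x p (app_subst sg s))); auto.
      * apply (steps_joinable_below_subrel E1 R1 (fun a b => a = u /\ b = t)); auto;
          [|apply (below_rstep R0 (replace_at x p (app_subst sg s))); auto].
        replace x with (replace_at y' p (app_subst sg t))
          by (unfold y'; rewrite replace_at_replace_at; apply replace_at_subterm_at; auto).
        apply rstep_at with u; auto. apply subterm_at_replace_at; congruence.
  - apply (steps_joinable_below_subrel E1 R1 R0); auto. apply rstep_at with l; auto.
Qed.

Lemma collapse_reflects_invariant : collapse_step E0 R0 E1 R1 -> steps_joinable_below E0 R0.
Proof.
  intros (s&t&u&[HR _]&Hsu&HE1) x y (l&r&p&sg&[Hlr|Hlr]&Hp&->) Hx Hy.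
  - apply (steps_joinable_below_subrel E1 R1 E0); auto; [intros; left; apply HE1; left; auto|].
    apply rstep_at with l; auto.
  - apply HR in Hlr as [Hlr|[-> ->]].
    + apply (steps_joinable_below_subrel E1 R1 R1); auto; [intros; right; auto|].
      apply rstep_at with l; auto.
    + set (x' := replace_at x p (app_subst sg u)).
      assert (Hxx' : rstep R1 x x') by (eapply rstep_instance; eauto).
      apply (joinable_via_reduct_below x x' _ R1); auto.
      * apply (steps_joinable_below_subrel E1 R1 R1); auto; [intros; right; auto|].
        apply (below_rstep R1 x); auto.
      * apply (steps_joinable_below_subrel E1 R1 (fun a b => a = u /\ b = t)); auto;
          [intros a b [-> ->]; left; apply HE1; right; auto| |apply (below_rstep R1 x); auto].
        unfold x'. rewrite <- (replace_at_replace_at x (app_subst sg u) (app_subst sg t) p).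
        apply rstep_at with u; auto. apply subterm_at_replace_at; congruence.
Qed.

Lemma compose_reflects_invariant : compose_step E0 R0 E1 R1 -> steps_joinable_below E0 R0.
Proof.
  intros (R'&s&t&u&[HR _]&Htu&HR1&HE1) x y (l&r&p&sg&[Hlr|Hlr]&Hp&->) Hx Hy.
  - apply (steps_joinable_below_subrel E1 R1 E0); auto; [intros; left; apply HE1; auto|].
    apply rstep_at with l; auto.
  - assert (HR'1 : forall a b, R' a b -> R1 a b) by (intros; apply HR1; left; auto).
    apply HR in Hlr as [Hlr|[-> ->]].
    + apply (steps_joinable_below_subrel E1 R1 R'); auto; [intros; right; auto|].
      apply rstep_at with l; auto.
    + set (z := replace_at x p (app_subst sg u)).
      assert (Hxz : rstep R1 x z) by (apply rstep_at with s; auto; apply HR1; right; auto).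
      assert (Hyz : rstep R1 (replace_at x p (app_subst sg t)) z).
      { unfold z. rewrite <- (replace_at_replace_at x (app_subst sg t) (app_subst sg u) p).
        eapply rstep_instance; [|apply subterm_at_replace_at; congruence].
        eapply rstep_mono; eauto. }
      assert (Hz : below z) by (apply (below_rstep R1 x); auto).
      apply (joinable_via_reduct_below x z _ R1); auto; [|apply joinable_sym];
        apply (steps_joinable_below_subrel E1 R1 R1); auto; intros; right; auto.
Qed.

Lemma IB_step_reflects_invariant : IB_step gt B E0 R0 E1 R1 -> steps_joinable_below E0 R0.
Proof.
  intros [D|[D|[D|[D|[D|D]]]]].
  - destruct D as (s&t&_&HE&HR). apply (steps_joinable_below_pm E0 R0 E1 R1); auto.
    intros a b [H|H]; left; [left; apply HE; left|right; apply HR]; auto.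
  - destruct D as (s&t&_&HE&HR). apply (steps_joinable_below_pm E0 R0 E1 R1); auto.
    intros a b [H|H]; [|left; right; apply HR; left; auto].
    destruct HE as [[HE _]|[HE _]]; apply HE in H as [H|[-> ->]];
      [left; left| |left; left|]; auto.
    + left; right; apply HR; right; auto.
    + right; right; apply HR; right; auto.
  - apply delete_reflects_invariant; auto.
  - apply simplify_reflects_invariant; auto.
  - apply collapse_reflects_invariant; auto.
  - apply compose_reflects_invariant; auto.
Qed.

End Step.
End RunInvariant.

Section Run.
Context {F : Type}.
Notation T := (@term F).
Variables B gt E : @rel F.
Variables (Es Rs : nat -> @rel F) (n : nat).
Hypothesis RO : reduction_order_compat B gt.
Hypothesis Hrun : is_run gt B E Es Rs n.
Hypothesis HEn : seteq (Es n) empty_rel.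

Lemma run_rules_decreasing i : i <= n -> forall l r, Rs i l r -> gt l r.
Proof.
  destruct Hrun as (_&H0&Hst).
  induction i as [|i IH]; intros Hi l r Hlr; [apply H0 in Hlr; contradiction|].
  assert (IH' := IH ltac:(lia)). specialize (Hst i ltac:(lia)).
  destruct Hst as [D|[D|[D|[D|[D|D]]]]].
  - destruct D as (s&t&_&_&HR). apply IH', HR; auto.
  - destruct D as (s&t&Hg&_&HR). apply HR in Hlr as [H|[-> ->]]; auto.
  - destruct D as (s&t&_&_&HR). apply IH', HR; auto.
  - destruct D as (E'&s&t&u&_&_&_&HR). apply IH', HR; auto.
  - destruct D as (s&t&u&[HR _]&_&_). apply IH', HR; left; auto.
  - destruct D as (R'&s&t&u&[HR _]&Htu&HR1&_).
    assert (HR' : forall a b, R' a b -> gt a b) by (intros a b Hab; apply IH', HR; left; auto).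
    apply HR1 in Hlr as [H|[-> ->]]; auto.
    apply (gt_trans B gt RO _ t); [apply IH', HR; right; auto|].
    apply (rstep_gt B gt RO R' HR'); auto.
Qed.

Section BelowW.
Variable w : T.
Hypothesis IH : forall u, gt w u -> unique_nf_mod B (Rs n) u.

Lemma run_invariant i : i <= n -> steps_joinable_below B gt (Rs n) w (Es i) (Rs i).
Proof.
  intros Hi. replace i with (n - (n - i)) by lia. generalize (n - i) as k.
  assert (Hg := run_rules_decreasing).
  destruct Hrun as (_&_&Hst).
  induction k as [|k IHk].
  - rewrite Nat.sub_0_r. intros x y Hxy _ _.
    apply rstep_union in Hxy as [(l&r&p&sg&Hlr&_)|H]; [apply HEn in Hlr; contradiction|].
    exists y, y; split; [apply rt_step; auto|split; [apply simB_refl|apply rt_refl]].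
  - destruct (Nat.le_gt_cases n k) as [Hk|Hk].
    + replace (n - S k) with (n - k) by lia. auto.
    + replace (n - k) with (S (n - S k)) in IHk by lia.
      apply (IB_step_reflects_invariant B gt (Rs n) RO (Hg n (le_n n)) w IH
               _ _ (Es (S (n - S k))) (Rs (S (n - S k)))); auto; [apply Hg; lia..|].
      apply Hst; lia.
Qed.

Lemma fair_cp_instances_joinable : fair B Es Rs n -> cp_instances_joinable_below B gt (Rs n) w.
Proof.
  intros [_ Hf] s t Hst v p dl Hv Hs Ht.
  destruct (Hf s t Hst) as [HJ|(i&Hi&HE)]; [apply joinable_replace_at; auto|].
  apply (steps_joinable_below_sstep B gt (Rs n) w (Es i) (Rs i)); auto; [apply run_invariant; auto|].
  assert (Hinst : sstep (Es i) (replace_at v p (app_subst dl s)) (replace_at v p (app_subst dl t)))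
    by (apply closed_replace_at_instance; auto using sstep_closed_under_contexts,
          sstep_closed_under_substs).
  destruct Hinst as [H|H]; [left|right]; eapply rstep_mono; try exact H; intros a b Hab; left; auto.
Qed.

End BelowW.

Theorem run_church_rosser : var_preserving B -> fair B Es Rs n -> church_rosser_mod (Rs n) B.
Proof.
  intros HB Hfair.
  apply (church_rosser_of_critical_pairs B gt (Rs n) RO (run_rules_decreasing n (le_n n))
           (proj1 Hfair) HB).
  intros w IHw. apply fair_cp_instances_joinable; auto.
Qed.

End Run.

Section Canonicity.
Context {F : Type}.
Notation T := (@term F).
Variables B gt R : @rel F.
Hypothesis RO : reduction_order_compat B gt.
Hypothesis R_gt : forall l r, R l r -> gt l r.

Lemma disj_add_remove (l r : T) : R l r -> disj_add R (remove R l r) l r.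
Proof.
  intros Hlr. split; [|intros [_ H]; auto].
  intros s t. unfold add, remove. split.
  - intros H. destruct (classic ((s, t) = (l, r))) as [He|He]; [right|left; auto].
    inversion He; auto.
  - intros [[H _]|[-> ->]]; auto.
Qed.

Lemma left_reduced_of_no_collapse : ~ collapse_applicable empty_rel R -> left_reduced R.
Proof.
  intros Hcoll l r Hlr (u&Hu). apply Hcoll.
  exists (add empty_rel u r), (remove R l r), l, r, u.
  split; [apply disj_add_remove; auto|]. split; auto. intros a b; tauto.
Qed.

(* A step inside [r] with [l -> r] itself is impossible since [l > r]; with any other rule it
   would be a Compose step. *)
Lemma rhs_normal_of_no_compose : ~ compose_applicable empty_rel R ->
  forall l r, R l r -> normal_form R r.
Proof.
  intros Hcomp l r Hlr (u&(l'&r'&q&sg&H1&H2&H3)).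
  destruct (classic ((l', r') = (l, r))) as [He|He].
  - injection He as -> ->. apply (gt_no_instance_in_rhs B gt RO l r q sg); auto.
  - apply Hcomp. exists empty_rel, (add (remove R l r) l u), (remove R l r), l, r, u.
    split; [apply disj_add_remove; auto|]. split.
    + exists l', r', q, sg; split; [split; auto|auto].
    + split; intros a b; tauto.
Qed.

(* If [r ->_{R/B} z] then [r] and [z] are joinable modulo [B]; as [r] is an [R]-normal form,
   [r ~_B b] for some [R]-reduct [b] of [z], and [r ~_B . > b] contradicts irreflexivity. *)
Lemma right_B_reduced_of_church_rosser : church_rosser_mod R B ->
  (forall l r, R l r -> normal_form R r) -> right_B_reduced R B.
Proof.
  intros HCR Hnf l r Hlr (z&(r'&z'&H1&H2&H3)).
  assert (Hc : conv (union R B) r z).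
  { eapply rt_trans; [|eapply rt_trans].
    - eapply conv_mono; [|exact H1]. intros a b Hab; right; auto.
    - apply rt_step. left. eapply rstep_mono; [|exact H2]. intros a b Hab; left; auto.
    - eapply conv_mono; [|exact H3]. intros a b Hab; right; auto. }
  destruct (HCR r z Hc) as (a&b&Ha&Hab&Hb).
  rewrite <- (normal_form_rsteps R r a (Hnf l r Hlr) Ha) in Hab.
  assert (Hrb : gt r' b).
  { apply (gt_rsteps B gt RO R R_gt) with z; auto.
    apply (gt_simB_r B gt RO) with z'; auto. apply (rstep_gt B gt RO R R_gt); auto. }
  apply (gt_irrefl B gt RO r). apply (gt_simB B gt RO r r' b r); auto. apply simB_sym; auto.
Qed.

End Canonicity.

Lemma seteq_eq {F : Type} (A B : @rel F) : seteq A B -> A = B.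
Proof.
  intros H. apply functional_extensionality; intros s. apply functional_extensionality; intros t.
  apply propositional_extensionality. apply H.
Qed.

Theorem lemma6p13 (F : Type) (B gt E R : @rel F) (Es Rs : nat -> @rel F) (n : nat) :
  var_preserving B ->
  reduction_order_compat B gt ->
  is_run gt B E Es Rs n ->
  seteq (Es n) empty_rel ->
  seteq (Rs n) R ->
  fair B Es Rs n ->
  ~ compose_applicable empty_rel R ->
  ~ collapse_applicable empty_rel R ->
  canonical_mod R B.
Proof.
  intros HB RO Hrun HEn HR Hfair Hcomp Hcoll.
  apply seteq_eq in HR. subst R.
  assert (R_gt := run_rules_decreasing B gt E Es Rs n RO Hrun n (le_n n)).
  assert (HCR := run_church_rosser B gt E Es Rs n RO Hrun HEn HB Hfair).
  split; [split|split].
  - apply (terminating_mod_of_gt B gt RO (Rs n) R_gt).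
  - exact HCR.
  - apply left_reduced_of_no_collapse; auto.
  - apply (right_B_reduced_of_church_rosser B gt (Rs n) RO R_gt HCR).
    apply (rhs_normal_of_no_compose B gt (Rs n) RO); auto.
Qed.
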